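(* For $n>0$, the image $\zeta_n(MS(n))\subset\mathrm{Map}(S^1,(S^1)^n)$ is exactly the space of based maps $g:S^1\to(S^1)^n$ such that: (1) for each $i=1,\dots,n$, $\mathrm{pr}_i\circ g$ is a weakly monotone degree $1$ map (where $\mathrm{pr}_i$ is the projection to the $i$-th factor); (2) there is a partition of $S^1$ into finitely many closed intervals meeting only at endpoints such that on each interval $\mathrm{pr}_i\circ g$ is constant for all indices $i$ except one special index; (3) the counterclockwise cyclic sequence of special indices contains no subsequence of the form $i,j,i,j$ with $i\neq j$. Consequently the images $\zeta_n(MS(n))$, $n\ge 0$ (with $\zeta_0$ the unique map to the point $\mathrm{Map}(S^1,(S^1)^0)$), form a symmetric suboperad of $\mathrm{Coend}(S^1)$.
   Context: Identify $S^1=I/\partial I$ with base point the image of $\partial I$. $\mathcal{F}(n)$ is the space of partitions $x$ of $S^1$ into $n$ closed $1$-submanifolds $I_1(x),\dots,I_n(x)$ of equal measure $1/n$ with pairwise disjoint interiors such that there is no cyclically ordered $4$-tuple $(z_1,z_2,z_3,z_4)$ with $z_1,z_3\in\mathrm{int}\,I_j(x)$, $z_2,z_4\in\mathrm{int}\,I_k(x)$, $j\ne k$. For $x\in\mathcal{F}(n)$ and $j$, $\pi_j:S^1\to S^1$ is the based map obtained by collapsing each connected component of the closure of $S^1\setminus I_j(x)$ to a point and rescaling the quotient circle by the factor $n$; $c(x)=(\pi_1,\dots,\pi_n):S^1\to(S^1)^n$. $\mathrm{Mon}(I,\partial I)$ is the space of self-maps of $S^1$ induced by weakly monotone maps $I\to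 I$ fixing $0$ and $1$. $MS(n)=\mathcal{F}(n)\times\mathrm{Mon}(I,\partial I)$ for $n>0$, $MS(0)$ a point, and $\zeta_n:MS(n)\to\mathrm{Map}(S^1,(S^1)^n)$, $\zeta_n(x,f)=c(x)\circ f$. $\mathrm{Coend}(S^1)$ is the symmetric operad with $\mathrm{Coend}(S^1)(n)=\mathrm{Map}(S^1,(S^1)^n)$, composition $f\circ_i g=(f_1,\dots,f_{i-1},g_1\circ f_i,\dots,g_l\circ f_i,f_{i+1},\dots,f_k)$, unit the identity, $\Sigma_n$ permuting coordinates. *)

From Stdlib Require Import Reals ZArith Arith Lia.
Open Scope R_scope.

(* ---------- The circle S^1 = I / dI, I = [0,1] ----------
   A point of S^1 is represented by a real number read modulo 1 (0 ~ 1 is the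
   base point).  A map S^1 -> (S^1)^n is represented by a function
   g : R -> nat -> R, of which only the values g t i with t in [0,1] and i < n
   matter, each coordinate being read modulo 1. *)

Definition inI (t : R) : Prop := 0 <= t <= 1.

Definition ceq (x y : R) : Prop := exists k : Z, x - y = IZR k.

Definition cnear (x y eps : R) : Prop := exists k : Z, Rabs (x - y - IZR k) < eps.

Definition rcont (h : R -> R) : Prop :=
  forall t, inI t -> forall eps, 0 < eps -> exists delta, 0 < delta /\
    forall s, inI s -> Rabs (s - t) < delta -> Rabs (h s - h t) < eps.

Definition ccont (h : R -> R) : Prop :=
  forall t, inI t -> forall eps, 0 < eps -> exists delta, 0 < delta /\
    forall s, inI s -> Rabs (s - t) < delta -> cnear (h s) (h t) eps.

Definition nondecr (h : R -> R) : Prop :=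
  forall s t, inI s -> inI t -> s <= t -> h s <= h t.

Definition cmap := R -> nat -> R.

Definition is_based_map (n : nat) (g : cmap) : Prop :=
  forall i, (i < n)%nat ->
    ccont (fun t => g t i) /\ ceq (g 0 i) 0 /\ ceq (g 1 i) 0.

Definition map_eq (n : nat) (g h : cmap) : Prop :=
  forall t, inI t -> forall i, (i < n)%nat -> ceq (g t i) (h t i).

Fixpoint rsum (f : nat -> R) (m : nat) : R :=
  match m with O => 0 | S m' => rsum f m' + f m' end.

Definition subdivision (m : nat) (t : nat -> R) : Prop :=
  (0 < m)%nat /\ t O = 0 /\ t m = 1 /\ forall k, (k < m)%nat -> t k < t (S k).

(* ---------- The space F(n) ----------
   A partition x is given by a subdivision of I and a label pd_lab k for each
   closed interval [t_k, t_{k+1}]; the piece I_j(x) is the union of the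
   intervals labelled j (seen in S^1).  Every closed 1-submanifold of S^1 is a
   finite union of such intervals, so every partition arises this way. *)
Record part_data := PD { pd_m : nat; pd_t : nat -> R; pd_lab : nat -> nat }.

Definition in_piece (x : part_data) (j : nat) (w : R) : Prop :=
  let u := frac_part w in
  exists k, (k < pd_m x)%nat /\ pd_lab x k = j /\
    (pd_t x k <= u <= pd_t x (S k) \/ (u = 0 /\ pd_t x (S k) = 1)).

Definition in_interior (x : part_data) (j : nat) (z : R) : Prop :=
  exists eps, 0 < eps /\ forall w, Rabs (w - z) < eps -> in_piece x j w.

Definition cyc4 (z1 z2 z3 z4 : R) : Prop :=
  (0 <= z1 < 1 /\ 0 <= z2 < 1 /\ 0 <= z3 < 1 /\ 0 <= z4 < 1) /\
  ((z1 < z2 /\ z2 < z3 /\ z3 < z4) \/ (z2 < z3 /\ z3 < z4 /\ z4 < z1) \/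
   (z3 < z4 /\ z4 < z1 /\ z1 < z2) \/ (z4 < z1 /\ z1 < z2 /\ z2 < z3)).

Definition piece_measure (x : part_data) (j : nat) : R :=
  rsum (fun k => if Nat.eqb (pd_lab x k) j
                 then pd_t x (S k) - pd_t x k else 0) (pd_m x).

Definition in_F (n : nat) (x : part_data) : Prop :=
  subdivision (pd_m x) (pd_t x) /\
  (forall k, (k < pd_m x)%nat -> (pd_lab x k < n)%nat) /\
  (forall j, (j < n)%nat -> piece_measure x j = 1 / INR n) /\
  (forall j k z, (j < n)%nat -> (k < n)%nat -> j <> k ->
     ~ (in_interior x j z /\ in_interior x k z)) /\
  (forall j k, (j < n)%nat -> (k < n)%nat -> j <> k ->
     forall z1 z2 z3 z4, ~ (cyc4 z1 z2 z3 z4 /\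
        in_interior x j z1 /\ in_interior x k z2 /\
        in_interior x j z3 /\ in_interior x k z4)).

(* pi_j : collapse each component of the closure of S^1 \ I_j(x) to a point
   and rescale by n; explicitly (arc-length parametrisation of the quotient
   from the base point) u |-> n * measure(I_j(x) /\ [0,u]), for u in I. *)
Definition pi_map (n : nat) (x : part_data) (j : nat) (u : R) : R :=
  INR n * rsum (fun k => if Nat.eqb (pd_lab x k) j
                         then Rmin u (pd_t x (S k)) - Rmin u (pd_t x k) else 0)
               (pd_m x).

Definition in_Mon (f : R -> R) : Prop :=
  rcont f /\ nondecr f /\ f 0 = 0 /\ f 1 = 1.

Definition zeta (n : nat) (x : part_data) (f : R -> R) : cmap :=
  fun t j => pi_map n x j (f t).

(* g lies in the image zeta_n(MS(n)); for n = 0, Map(S^1,(S^1)^0) is a point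
   and MS(0) is a point, so the image is everything. *)
Definition in_image (n : nat) (g : cmap) : Prop :=
  n = O \/ exists x f, in_F n x /\ in_Mon f /\ map_eq n g (zeta n x f).

(* condition (1) : each pr_i o g is a weakly monotone degree one map, i.e.
   it has a continuous nondecreasing lift h : I -> R with h 0 = 0, h 1 = 1 *)
Definition cond1 (n : nat) (g : cmap) : Prop :=
  forall i, (i < n)%nat -> exists h : R -> R,
    rcont h /\ nondecr h /\ h 0 = 0 /\ h 1 = 1 /\
    forall t, inI t -> ceq (h t) (g t i).

Definition cond23 (n : nat) (g : cmap) : Prop :=
  exists (m : nat) (s : nat -> R) (sp : nat -> nat),
    subdivision m s /\
    (forall k, (k < m)%nat -> (sp k < n)%nat) /\
    (forall k i, (k < m)%nat -> (i < n)%nat -> i <> sp k ->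
       forall u, s k <= u <= s (S k) -> ceq (g u i) (g (s k) i)) /\
    (forall a b c d, (a < b)%nat -> (b < c)%nat -> (c < d)%nat -> (d < m)%nat ->
       ~ (sp a = sp c /\ sp b = sp d /\ sp a <> sp b)).

(* f o_i g  (0-based index i < k; f of arity k, g of arity l) *)
Definition comp_op (k l i : nat) (f g : cmap) : cmap :=
  fun t p =>
    if Nat.ltb p i then f t p
    else if Nat.ltb p (i + l) then g (frac_part (f t i)) (p - i)%nat
    else f t (p - l + 1)%nat.

Definition id_op : cmap := fun t _ => t.

Definition is_perm (n : nat) (sigma : nat -> nat) : Prop :=
  (forall p, (p < n)%nat -> (sigma p < n)%nat) /\
  (forall p q, (p < n)%nat -> (q < n)%nat -> sigma p = sigma q -> p = q).

Definition perm_act (g : cmap) (sigma : nat -> nat) : cmap :=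
  fun t p => g t (sigma p).

(* Both directions of the characterisation go through "lift data": real
   lifts H t j of the coordinates (continuous, nondecreasing, from 0 to 1),
   a subdivision s of I and special indices sp such that on [s q, s (q+1)]
   only the coordinate sp q moves, the special sequence being noncrossing.
   - A point zeta_n(x,f) has lift data: the lifts are the pi_j(f t), the
     subdivision is pulled back along f, the special indices are the labels.
   - Conversely, lift data yields a preimage: f is the average of the lifts,
     and x is obtained by keeping the intervals on which f increases, the
     piece I_j(x) being the image under f of the intervals where j moves.
     A combinatorial lemma reduces the interior conditions of F(n) to the
     noncrossing of the labels.
   Closure under the operad structure is then proved on lift data: the
   identity is trivial, permutations and the composition with an arity-zero
   operation are reindexings, and f o_i g is obtained by refining each
   interval of f where coordinate i moves along the subdivision of g. *)

From Pilot Require Import Defs.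
From Stdlib Require Import Reals ZArith Arith Lia Lra ClassicalEpsilon.
From Stdlib Require FinFun.
(* Defs.subdivision must take precedence over the homonym of Stdlib.Reals. *)
Import Pilot.Defs.
Open Scope R_scope.

Lemma rsum_ext f g m : (forall k, (k < m)%nat -> f k = g k) -> rsum f m = rsum g m.
Proof.
  induction m as [|m IH]; simpl; intros Hfg; auto.
  rewrite IH by (intros; apply Hfg; lia). rewrite Hfg by lia. reflexivity.
Qed.

Lemma rsum_minus f g m : rsum (fun k => f k - g k) m = rsum f m - rsum g m.
Proof. induction m as [|m IH]; simpl; [lra|]. rewrite IH; lra. Qed.

Lemma rsum_scal c f m : rsum (fun k => c * f k) m = c * rsum f m.
Proof. induction m as [|m IH]; simpl; [lra|]. rewrite IH; lra. Qed.

Lemma rsum_const c m : rsum (fun _ => c) m = INR m * c.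
Proof. induction m as [|m IH]; simpl rsum; [simpl; lra|]. rewrite IH, S_INR; lra. Qed.

Lemma rsum_zero f m : (forall k, (k < m)%nat -> f k = 0) -> rsum f m = 0.
Proof.
  intros Hf. rewrite (rsum_ext f (fun _ => 0)), rsum_const by auto. ring.
Qed.

Lemma rsum_le f g m : (forall k, (k < m)%nat -> f k <= g k) -> rsum f m <= rsum g m.
Proof.
  induction m as [|m IH]; simpl; intros Hfg; [lra|].
  assert (f m <= g m) by (apply Hfg; lia).
  assert (rsum f m <= rsum g m) by (apply IH; intros; apply Hfg; lia). lra.
Qed.

Lemma rsum_single f n j :
  (j < n)%nat -> (forall i, (i < n)%nat -> i <> j -> f i = 0) -> rsum f n = f j.
Proof.
  induction n as [|n IH]; intros Hj Hf; [lia|]. simpl.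
  destruct (Nat.eq_dec j n) as [->|Hne].
  - rewrite rsum_zero; [lra|]. intros; apply Hf; lia.
  - rewrite IH, (Hf n) by (try lia; intros; apply Hf; lia). lra.
Qed.

Lemma rsum_telescope a m : rsum (fun q => a (S q) - a q) m = a m - a O.
Proof. induction m as [|m IH]; simpl; [lra|]. rewrite IH; lra. Qed.

Lemma rsum_abs_diff f g m :
  Rabs (rsum f m - rsum g m) <= rsum (fun k => Rabs (f k - g k)) m.
Proof.
  induction m as [|m IH]; simpl; [rewrite Rminus_0_r, Rabs_R0; lra|].
  replace (rsum f m + f m - (rsum g m + g m))
    with ((rsum f m - rsum g m) + (f m - g m)) by ring.
  eapply Rle_trans; [apply Rabs_triang|]. lra.
Qed.

Lemma ceq_refl x : ceq x x.
Proof. exists 0%Z; simpl; lra. Qed.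

Lemma ceq_sym x y : ceq x y -> ceq y x.
Proof. intros [k Hk]; exists (- k)%Z; rewrite opp_IZR; lra. Qed.

Lemma ceq_trans x y z : ceq x y -> ceq y z -> ceq x z.
Proof. intros [k Hk] [l Hl]; exists (k + l)%Z; rewrite plus_IZR; lra. Qed.

Lemma ceq_10 : ceq 1 0.
Proof. exists 1%Z; simpl; lra. Qed.

Lemma frac_id r : 0 <= r < 1 -> frac_part r = r.
Proof. intros Hr. unfold frac_part. rewrite <- (Int_part_spec r 0); simpl; lra. Qed.

Lemma frac_range r : 0 <= frac_part r < 1.
Proof. destruct (base_fp r); lra. Qed.

Lemma frac_ceq_self r : ceq (frac_part r) r.
Proof. unfold frac_part. exists (- Int_part r)%Z. rewrite opp_IZR. lra. Qed.

Lemma frac_ceq x y : ceq x y -> frac_part x = frac_part y.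
Proof.
  intros [k Hk]. unfold frac_part.
  assert (E : Int_part x = (Int_part y + k)%Z).
  { symmetry; apply Int_part_spec. rewrite plus_IZR.
    destruct (base_Int_part y). lra. }
  rewrite E, plus_IZR. lra.
Qed.

(* Continuity on I.  Extending by the retraction clamp : R -> I lets us use
   the intermediate value theorem of the standard library. *)

Definition clamp (s : R) := Rmax 0 (Rmin 1 s).

Lemma clamp_lip s t : Rabs (clamp s - clamp t) <= Rabs (s - t).
Proof.
  unfold clamp, Rmax, Rmin. repeat destruct Rle_dec;
  unfold Rabs; repeat destruct Rcase_abs; lra.
Qed.

Lemma clamp_I s : inI (clamp s).
Proof. unfold inI, clamp, Rmax, Rmin. repeat destruct Rle_dec; lra. Qed.

Lemma clamp_id s : inI s -> clamp s = s.
Proof. unfold inI, clamp, Rmax, Rmin. intros. repeat destruct Rle_dec; lra. Qed.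

Lemma rcont_clamp_continuity h : rcont h -> continuity (fun s => h (clamp s)).
Proof.
  intros Hh x eps He.
  destruct (Hh (clamp x) (clamp_I x) eps He) as [d [Hd Hd2]].
  exists d; split; auto. intros y [_ Hy]. simpl in *. unfold R_dist in *.
  apply Hd2; [apply clamp_I|]. eapply Rle_lt_trans; [apply clamp_lip|]. auto.
Qed.

Lemma rcont_IVT h a b y : rcont h -> inI a -> inI b -> a <= b -> h a <= y <= h b ->
  exists u, a <= u <= b /\ h u = y.
Proof.
  intros Hh Ha Hb Hab Hy.
  destruct (IVT_cor (fun s => h (clamp s) - y) a b) as [z [Hz1 Hz2]]; auto.
  - apply continuity_minus; [apply rcont_clamp_continuity; auto|].
    apply continuity_const; intros ? ?; auto.
  - rewrite !clamp_id by auto. nra.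
  - exists z; split; auto. rewrite clamp_id in Hz2; [lra|]. unfold inI in *; lra.
Qed.

Lemma rcont_const c : rcont (fun _ => c).
Proof.
  intros t Ht e He. exists 1; split; [lra|]. intros.
  replace (c - c) with 0 by ring. rewrite Rabs_R0; auto.
Qed.

Lemma rcont_plus h1 h2 : rcont h1 -> rcont h2 -> rcont (fun t => h1 t + h2 t).
Proof.
  intros H1 H2 t Ht e He.
  destruct (H1 t Ht (e/2)) as [d1 [Hd1 P1]]; [lra|].
  destruct (H2 t Ht (e/2)) as [d2 [Hd2 P2]]; [lra|].
  exists (Rmin d1 d2); split; [apply Rmin_pos; auto|]. intros s Hs Hst.
  pose proof (Rmin_l d1 d2); pose proof (Rmin_r d1 d2).
  specialize (P1 s Hs ltac:(lra)). specialize (P2 s Hs ltac:(lra)).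
  replace (h1 s + h2 s - (h1 t + h2 t)) with ((h1 s - h1 t) + (h2 s - h2 t)) by ring.
  eapply Rle_lt_trans; [apply Rabs_triang|]. lra.
Qed.

Lemma rcont_rsum (H : R -> nat -> R) n :
  (forall i, (i < n)%nat -> rcont (fun t => H t i)) -> rcont (fun t => rsum (H t) n).
Proof.
  induction n as [|n IH]; intros Hc; simpl; [apply rcont_const|].
  apply rcont_plus; [apply IH; intros; apply Hc; lia | apply Hc; lia].
Qed.

Lemma rcont_lip (P : R -> R) L f :
  0 < L -> (forall u w, Rabs (P u - P w) <= L * Rabs (u - w)) ->
  rcont f -> rcont (fun t => P (f t)).
Proof.
  intros HL HP Hf t Ht e He.
  destruct (Hf t Ht (e / L)) as [d [Hd Q]]; [apply Rdiv_lt_0_compat; auto|].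
  exists d; split; auto. intros s Hs Hst. specialize (Q s Hs Hst).
  eapply Rle_lt_trans; [apply HP|].
  apply (Rmult_lt_compat_l L) in Q; auto. unfold Rdiv in Q.
  rewrite <- Rmult_assoc, (Rmult_comm L e), Rmult_assoc, Rinv_r in Q; lra.
Qed.

Lemma rcont_comp K H : rcont K -> rcont H -> (forall t, inI t -> inI (H t)) ->
  rcont (fun t => K (H t)).
Proof.
  intros HK HH HI t Ht e He.
  destruct (HK (H t) (HI t Ht) e He) as [d1 [Hd1 P1]].
  destruct (HH t Ht d1 Hd1) as [d2 [Hd2 P2]].
  exists d2; split; auto.
Qed.

Lemma IZR_not_half k : IZR k = 1/2 \/ IZR k = -(1/2) -> False.
Proof.
  intros [E|E]; [assert (0 < IZR k < 1) as [A B] by lra | assert (-1 < IZR k < 0) as [A B] by lra];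
  apply lt_IZR in A; apply lt_IZR in B; lia.
Qed.

(* A continuous real lift of a circle map that is constant on [a,b] is itself
   constant there: otherwise it would take a value h a +- 1/2 in between. *)
Lemma lift_constant h a b : rcont h -> inI a -> inI b ->
  (forall u, a <= u <= b -> ceq (h u) (h a)) -> forall u, a <= u <= b -> h u = h a.
Proof.
  intros Hh Ha Hb Hc u Hu.
  destruct (Hc u Hu) as [k Hk].
  assert (HuI : inI u) by (unfold inI in *; lra).
  destruct (Z.eq_dec k 0) as [->|Hk0]; [simpl in Hk; lra|].
  destruct (Z_lt_le_dec 0 k) as [Hp|Hn].
  - assert (1 <= IZR k) by (apply IZR_le; lia).
    destruct (rcont_IVT h a u (h a + 1/2) Hh Ha HuI) as [v [Hv Hv2]]; [lra|lra|].
    destruct (Hc v ltac:(lra)) as [k' Hk']. exfalso. apply (IZR_not_half k'). lra.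
  - assert (IZR k <= -1) by (apply IZR_le; lia).
    destruct (rcont_IVT (fun s => - h s) a u (- h a + 1/2)) as [v [Hv Hv2]]; auto; [|lra|lra|].
    + apply (rcont_lip (fun r => - r) 1 h); [lra| |auto].
      intros; replace (- u0 - - w) with (- (u0 - w)) by ring; rewrite Rabs_Ropp; lra.
    + destruct (Hc v ltac:(lra)) as [k' Hk']. exfalso. apply (IZR_not_half k'). lra.
Qed.

(* Subdivisions.  Weak subdivisions (nondecreasing nodes) arise when a
   subdivision is pulled back or refined. *)

Definition wsubdivision (m : nat) (s : nat -> R) : Prop :=
  (0 < m)%nat /\ s O = 0 /\ s m = 1 /\ forall k, (k < m)%nat -> s k <= s (S k).

Lemma subdivision_weak m s : subdivision m s -> wsubdivision m s.
Proof.
  intros [A [B [C D]]]. repeat split; auto. intros k Hk; specialize (D k Hk); lra.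
Qed.

Lemma wsub_mono m s : wsubdivision m s ->
  forall p q, (p <= q)%nat -> (q <= m)%nat -> s p <= s q.
Proof.
  intros [_ [_ [_ Hs]]] p q Hpq Hq. induction q as [|q IH].
  - replace p with 0%nat by lia; lra.
  - destruct (Nat.eq_dec p (S q)) as [->|Hne]; [lra|].
    specialize (IH ltac:(lia) ltac:(lia)). specialize (Hs q ltac:(lia)). lra.
Qed.

Lemma wsub_I m s : wsubdivision m s -> forall p, (p <= m)%nat -> inI (s p).
Proof.
  intros Hs p Hp. pose proof (wsub_mono m s Hs 0 p ltac:(lia) Hp).
  pose proof (wsub_mono m s Hs p m Hp ltac:(lia)). destruct Hs as [_ [E0 [E1 _]]].
  unfold inI; lra.
Qed.

Lemma wsub_idx m s : wsubdivision m s ->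
  forall p q, (p <= m)%nat -> (q <= m)%nat -> s p < s q -> (p < q)%nat.
Proof.
  intros Hs p q Hp Hq Hlt. destruct (le_lt_dec q p) as [Hle|]; auto.
  pose proof (wsub_mono m s Hs q p Hle Hp). lra.
Qed.

Lemma sub_locate m t : subdivision m t -> forall u, 0 <= u < 1 ->
  exists K, (K < m)%nat /\ t K <= u < t (S K).
Proof.
  intros [Hm [H0 [H1 Hinc]]] u Hu.
  assert (Hp : forall p, (p <= m)%nat -> u < t p ->
            exists K, (K < p)%nat /\ t K <= u < t (S K)).
  { induction p as [|p IH]; intros Hp Hlt; [lra|].
    destruct (Rlt_le_dec u (t p)) as [Hlt'|Hle].
    - destruct (IH ltac:(lia) Hlt') as [K [HK1 HK2]]. exists K; split; auto.
    - exists p; split; auto. }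
  destruct (Hp m ltac:(lia) ltac:(lra)) as [K [HK1 HK2]]. exists K; auto.
Qed.

(* The cyclic sequence sp 0, ..., sp (m-1) contains no subsequence i,j,i,j
   with i <> j (for a linear sequence this is the same as cyclically). *)
Definition noncrossing (m : nat) (sp : nat -> nat) : Prop :=
  forall a b c d, (a < b)%nat -> (b < c)%nat -> (c < d)%nat -> (d < m)%nat ->
    ~ (sp a = sp c /\ sp b = sp d /\ sp a <> sp b).

Definition pterm (x : part_data) (j : nat) (v : R) (k : nat) : R :=
  if Nat.eqb (pd_lab x k) j then Rmin v (pd_t x (S k)) - Rmin v (pd_t x k) else 0.

Lemma pi_map_pterm n x j v : pi_map n x j v = INR n * rsum (pterm x j v) (pd_m x).
Proof. reflexivity. Qed.

Lemma Rmin_lip u w c : Rabs (Rmin u c - Rmin w c) <= Rabs (u - w).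
Proof. unfold Rmin; repeat destruct Rle_dec; unfold Rabs; repeat destruct Rcase_abs; lra. Qed.

Lemma pterm_lip x j u w k : Rabs (pterm x j u k - pterm x j w k) <= 2 * Rabs (u - w).
Proof.
  unfold pterm. destruct Nat.eqb.
  - set (a := pd_t x k); set (b := pd_t x (S k)).
    replace (Rmin u b - Rmin u a - (Rmin w b - Rmin w a))
      with ((Rmin u b - Rmin w b) + - (Rmin u a - Rmin w a)) by ring.
    eapply Rle_trans; [apply Rabs_triang|]. rewrite Rabs_Ropp.
    pose proof (Rmin_lip u w b). pose proof (Rmin_lip u w a). lra.
  - rewrite Rminus_0_r, Rabs_R0. pose proof (Rabs_pos (u - w)); lra.
Qed.

Lemma pi_map_lip n x j u w :
  Rabs (pi_map n x j u - pi_map n x j w) <= (INR n * (2 * INR (pd_m x)) + 1) * Rabs (u - w).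
Proof.
  rewrite !pi_map_pterm, <- Rmult_minus_distr_l, Rabs_mult, Rabs_right by (apply Rle_ge, pos_INR).
  set (D := rsum (pterm x j u) (pd_m x) - rsum (pterm x j w) (pd_m x)).
  assert (HD : Rabs D <= INR (pd_m x) * (2 * Rabs (u - w))).
  { eapply Rle_trans; [apply rsum_abs_diff|]. rewrite <- rsum_const.
    apply rsum_le. intros; apply pterm_lip. }
  pose proof (pos_INR n). pose proof (Rabs_pos (u - w)). pose proof (Rabs_pos D).
  assert (INR n * Rabs D <= INR n * (INR (pd_m x) * (2 * Rabs (u - w))))
    by (apply Rmult_le_compat_l; lra).
  nra.
Qed.

Section PiMaps.
Variables (n : nat) (x : part_data).
Hypothesis HF : in_F n x.
Let m := pd_m x.
Let t := pd_t x.

Lemma in_F_wsub : wsubdivision m t.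
Proof. apply subdivision_weak, HF. Qed.

Lemma t_I k : (k <= m)%nat -> 0 <= t k <= 1.
Proof. apply (wsub_I m t in_F_wsub). Qed.

Lemma pi_map_mono j u w : u <= w -> pi_map n x j u <= pi_map n x j w.
Proof.
  intros Huw. rewrite !pi_map_pterm. apply Rmult_le_compat_l; [apply pos_INR|].
  apply rsum_le; intros k Hk. unfold pterm.
  pose proof (proj2 (proj2 (proj2 in_F_wsub)) k Hk). fold t.
  destruct Nat.eqb; [|lra]. unfold Rmin; repeat destruct Rle_dec; lra.
Qed.

Lemma pi_map_0 j : pi_map n x j 0 = 0.
Proof.
  rewrite pi_map_pterm, rsum_zero; [ring|]. intros k Hk. unfold pterm. fold t.
  pose proof (t_I k ltac:(lia)). pose proof (t_I (S k) ltac:(lia)).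
  destruct Nat.eqb; auto. rewrite !Rmin_left by lra. ring.
Qed.

(* pi_j(1) = n * measure(I_j(x)) = 1. *)
Lemma pi_map_1 j : (0 < n)%nat -> (j < n)%nat -> pi_map n x j 1 = 1.
Proof.
  intros Hn Hj. pose proof HF as [_ [_ [Hmeas _]]]. specialize (Hmeas j Hj).
  unfold piece_measure in Hmeas. rewrite pi_map_pterm.
  rewrite (rsum_ext _ (fun k => if Nat.eqb (pd_lab x k) j then pd_t x (S k) - pd_t x k else 0)).
  - rewrite Hmeas. field. apply not_0_INR; lia.
  - intros k Hk. unfold pterm. fold t.
    pose proof (t_I k ltac:(lia)). pose proof (t_I (S k) ltac:(lia)).
    destruct Nat.eqb; auto. rewrite !Rmin_right by lra. ring.
Qed.

Lemma pi_map_flat j v q : (q < m)%nat -> pd_lab x q <> j -> t q <= v <= t (S q) ->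
  pi_map n x j v = pi_map n x j (t q).
Proof.
  intros Hq Hl Hv. rewrite !pi_map_pterm. f_equal. apply rsum_ext. intros k Hk.
  unfold pterm. fold t. destruct (Nat.eqb_spec (pd_lab x k) j) as [E|]; auto.
  assert (k <> q) by congruence.
  pose proof (wsub_mono m t in_F_wsub k (S k) ltac:(lia) ltac:(lia)).
  destruct (lt_dec k q).
  - pose proof (wsub_mono m t in_F_wsub (S k) q ltac:(lia) ltac:(lia)).
    rewrite !Rmin_right by lra. reflexivity.
  - pose proof (wsub_mono m t in_F_wsub (S q) k ltac:(lia) ltac:(lia)).
    rewrite !Rmin_left by lra. ring.
Qed.

Lemma mid_interior q : (q < m)%nat -> in_interior x (pd_lab x q) ((t q + t (S q)) / 2).
Proof.
  intros Hq. pose proof (proj2 (proj2 (proj2 (proj1 HF))) q Hq) as Hlt. fold t in Hlt.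
  pose proof (t_I q ltac:(lia)). pose proof (t_I (S q) ltac:(lia)).
  exists ((t (S q) - t q) / 2). split; [lra|]. intros w Hw.
  assert (t q < w < t (S q)) by (unfold Rabs in Hw; destruct Rcase_abs; lra).
  unfold in_piece. rewrite frac_id by lra. exists q. repeat split; auto; left; fold t; lra.
Qed.

(* The labels of x are noncrossing: the midpoints of four crossing intervals
   would violate the noncrossing condition of F(n). *)
Lemma labels_noncrossing : noncrossing m (pd_lab x).
Proof.
  intros a b c d Hab Hbc Hcd Hd [E1 [E2 E3]].
  pose proof HF as [Hsub [Hl [_ [_ Hx]]]].
  set (mid q := (t q + t (S q)) / 2).
  assert (Hmid : forall q, (q < m)%nat -> 0 <= mid q < 1 /\ t q < mid q < t (S q)).
  { intros q Hq. pose proof (proj2 (proj2 (proj2 Hsub)) q Hq) as Hlt. fold t in Hlt.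
    pose proof (t_I q ltac:(lia)). pose proof (t_I (S q) ltac:(lia)). unfold mid; lra. }
  apply (Hx (pd_lab x a) (pd_lab x b) (Hl a ltac:(fold m; lia)) (Hl b ltac:(fold m; lia)) E3
           (mid a) (mid b) (mid c) (mid d)).
  pose proof (Hmid a ltac:(lia)). pose proof (Hmid b ltac:(lia)).
  pose proof (Hmid c ltac:(lia)). pose proof (Hmid d ltac:(lia)).
  pose proof (wsub_mono m t in_F_wsub (S a) b ltac:(lia) ltac:(lia)).
  pose proof (wsub_mono m t in_F_wsub (S b) c ltac:(lia) ltac:(lia)).
  pose proof (wsub_mono m t in_F_wsub (S c) d ltac:(lia) ltac:(lia)).
  split; [split; [tauto | left; lra]|].
  split; [apply mid_interior; lia|]. split; [apply mid_interior; lia|].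
  split; [rewrite E1; apply mid_interior; lia|]. rewrite E2; apply mid_interior; lia.
Qed.

End PiMaps.

Section InteriorConditions.
Variable x : part_data.
Hypothesis HS : subdivision (pd_m x) (pd_t x).
Let M := pd_m x.
Let t := pd_t x.
Let lab := pd_lab x.

(* A point interior to I_j(x) and lying in [t K, t (K+1)) forces lab K = j:
   points slightly to its right lie in the interval K only. *)
Lemma interior_lab j z K :
  in_interior x j z -> (K < M)%nat -> t K <= frac_part z < t (S K) -> lab K = j.
Proof.
  intros [eps [He Hw]] HK Hz.
  pose proof (frac_range z) as Hfr. pose proof (frac_ceq_self z) as [k Hk].
  set (u0 := frac_part z) in *. set (d := Rmin eps (t (S K) - u0) / 2).
  assert (Hd : 0 < d /\ d < eps /\ u0 + d < t (S K)).
  { unfold d. pose proof (Rmin_l eps (t (S K) - u0)). pose proof (Rmin_r eps (t (S K) - u0)).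
    assert (0 < Rmin eps (t (S K) - u0)) by (apply Rmin_pos; lra). lra. }
  specialize (Hw (z + d) ltac:(replace (z + d - z) with d by ring; rewrite Rabs_right; lra)).
  pose proof (wsub_I M t (subdivision_weak _ _ HS) (S K) ltac:(lia)) as HtI.
  assert (Hf : frac_part (z + d) = u0 + d).
  { rewrite <- (frac_id (u0 + d)) by (unfold inI in HtI; lra). apply frac_ceq.
    exists (-k)%Z. rewrite opp_IZR. lra. }
  destruct Hw as [K' [HK' [HL Hin]]]. rewrite Hf in Hin.
  destruct Hin as [Hin|[Hin _]]; [|lra].
  destruct (lt_eq_lt_dec K' K) as [[Hlt| ->]|Hgt]; auto.
  - pose proof (wsub_mono M t (subdivision_weak _ _ HS) (S K') K ltac:(lia) ltac:(lia)).
    fold t in Hin. lra.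
  - pose proof (wsub_mono M t (subdivision_weak _ _ HS) (S K) K' ltac:(lia) ltac:(lia)).
    fold t in Hin. lra.
Qed.

Lemma interior_disjoint j k z : j <> k -> ~ (in_interior x j z /\ in_interior x k z).
Proof.
  intros Hjk [H1 H2]. destruct (sub_locate M t HS (frac_part z) (frac_range z)) as [K [HK Hz]].
  apply Hjk. rewrite <- (interior_lab j z K), <- (interior_lab k z K); auto.
Qed.

(* Four points in increasing order, interior to pieces a, b, a, b, lie in
   intervals of increasing index carrying labels a, b, a, b. *)
Lemma interior_crossing z1 z2 z3 z4 a b : a <> b -> noncrossing M lab ->
  0 <= z1 -> z1 < z2 -> z2 < z3 -> z3 < z4 -> z4 < 1 ->
  in_interior x a z1 -> in_interior x b z2 -> in_interior x a z3 -> in_interior x b z4 -> False.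
Proof.
  intros Hab HN H0 H12 H23 H34 H4 I1 I2 I3 I4.
  assert (Hloc : forall z j, 0 <= z < 1 -> in_interior x j z ->
             exists K, (K < M)%nat /\ t K <= z < t (S K) /\ lab K = j).
  { intros z j Hz Iz. destruct (sub_locate M t HS z Hz) as [K [HK L]].
    exists K. repeat split; auto; try lra. apply (interior_lab j z); auto. rewrite frac_id; lra. }
  assert (Horder : forall z z' K K', (K < M)%nat -> (K' < M)%nat ->
            t K <= z < t (S K) -> t K' <= z' < t (S K') -> z < z' -> (K <= K')%nat).
  { intros z z' K K' HK HK' Hz Hz' Hzz. destruct (le_lt_dec K K'); auto.
    pose proof (wsub_mono M t (subdivision_weak _ _ HS) (S K') K ltac:(lia) ltac:(lia)). lra. }
  destruct (Hloc z1 a ltac:(lra) I1) as [K1 [HK1 [L1 E1]]].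
  destruct (Hloc z2 b ltac:(lra) I2) as [K2 [HK2 [L2 E2]]].
  destruct (Hloc z3 a ltac:(lra) I3) as [K3 [HK3 [L3 E3]]].
  destruct (Hloc z4 b ltac:(lra) I4) as [K4 [HK4 [L4 E4]]].
  pose proof (Horder z1 z2 K1 K2 HK1 HK2 L1 L2 H12).
  pose proof (Horder z2 z3 K2 K3 HK2 HK3 L2 L3 H23).
  pose proof (Horder z3 z4 K3 K4 HK3 HK4 L3 L4 H34).
  assert (K1 <> K2) by congruence. assert (K2 <> K3) by congruence. assert (K3 <> K4) by congruence.
  apply (HN K1 K2 K3 K4); lia.
Qed.

Lemma interior_noncrossing : noncrossing M lab -> forall j k, j <> k ->
  forall z1 z2 z3 z4, ~ (cyc4 z1 z2 z3 z4 /\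
    in_interior x j z1 /\ in_interior x k z2 /\ in_interior x j z3 /\ in_interior x k z4).
Proof.
  intros HN j k Hjk z1 z2 z3 z4 [[[R1 [R2 [R3 R4]]] C] [I1 [I2 [I3 I4]]]].
  destruct C as [C|[C|[C|C]]].
  - apply (interior_crossing z1 z2 z3 z4 j k); auto; lra.
  - apply (interior_crossing z2 z3 z4 z1 k j); auto; lra.
  - apply (interior_crossing z3 z4 z1 z2 j k); auto; lra.
  - apply (interior_crossing z4 z1 z2 z3 k j); auto; lra.
Qed.

End InteriorConditions.

Lemma in_F_of_labels n x : subdivision (pd_m x) (pd_t x) ->
  (forall k, (k < pd_m x)%nat -> (pd_lab x k < n)%nat) ->
  (forall j, (j < n)%nat -> piece_measure x j = 1 / INR n) ->
  noncrossing (pd_m x) (pd_lab x) -> in_F n x.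
Proof.
  intros HS Hl Hm HN. split; [auto|]. split; [auto|]. split; [auto|]. split.
  - intros j k z _ _ Hjk. apply interior_disjoint; auto.
  - intros j k _ _ Hjk. apply interior_noncrossing; auto.
Qed.

Definition monotone_lifts (n : nat) (H : R -> nat -> R) : Prop :=
  forall j, (j < n)%nat ->
    rcont (fun t => H t j) /\ nondecr (fun t => H t j) /\ H 0 j = 0 /\ H 1 j = 1.

Definition special_structure (n : nat) (H : R -> nat -> R) (m : nat) (s : nat -> R)
  (sp : nat -> nat) : Prop :=
  (forall k, (k < m)%nat -> (sp k < n)%nat) /\
  (forall q j, (q < m)%nat -> (j < n)%nat -> j <> sp q ->
     forall u, s q <= u <= s (S q) -> H u j = H (s q) j).

(* Noncrossing of the special indices of the intervals on which the special
   coordinate actually moves; the other intervals are irrelevant. *)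
Definition active_noncrossing (H : R -> nat -> R) (m : nat) (s : nat -> R)
  (sp : nat -> nat) : Prop :=
  forall a b c d, (a < b)%nat -> (b < c)%nat -> (c < d)%nat -> (d < m)%nat ->
    H (s a) (sp a) < H (s (S a)) (sp a) -> H (s b) (sp b) < H (s (S b)) (sp b) ->
    H (s c) (sp c) < H (s (S c)) (sp c) -> H (s d) (sp d) < H (s (S d)) (sp d) ->
    ~ (sp a = sp c /\ sp b = sp d /\ sp a <> sp b).

Definition represents (n : nat) (g : cmap) (H : R -> nat -> R) : Prop :=
  forall t, inI t -> forall j, (j < n)%nat -> ceq (g t j) (H t j).

Lemma noncrossing_active H m s sp : noncrossing m sp -> active_noncrossing H m s sp.
Proof. intros HN a b c d ? ? ? ? _ _ _ _. apply HN; auto. Qed.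

Lemma monotone_lifts_I n H j t : monotone_lifts n H -> (j < n)%nat -> inI t -> inI (H t j).
Proof.
  intros HL Hj Ht. destruct (HL j Hj) as [_ [Hm [H0 H1]]]. unfold inI in *.
  pose proof (Hm 0 t ltac:(unfold inI; lra) Ht ltac:(lra)).
  pose proof (Hm t 1 Ht ltac:(unfold inI; lra) ltac:(lra)). simpl in *. lra.
Qed.

Lemma pullback_subdivision f m t : in_Mon f -> subdivision m t ->
  exists s, subdivision m s /\ forall q, (q <= m)%nat -> f (s q) = t q.
Proof.
  intros HM Ht. pose proof HM as [Hfc [Hfm [Hf0 Hf1]]].
  pose proof (wsub_I m t (subdivision_weak _ _ Ht)) as HtI.
  set (s q := if Nat.eqb q 0 then 0 else if Nat.eqb q m then 1 else
                epsilon (inhabits 0) (fun u => inI u /\ f u = t q)).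
  destruct Ht as [Hm0 [Ht0 [Ht1 Hinc]]].
  assert (Hs : forall q, (q <= m)%nat -> inI (s q) /\ f (s q) = t q).
  { intros q Hq. unfold s. specialize (HtI q Hq).
    destruct (Nat.eqb_spec q 0) as [->|H0]; [split; [unfold inI; lra | congruence]|].
    destruct (Nat.eqb_spec q m) as [->|H1]; [split; [unfold inI; lra | congruence]|].
    apply (epsilon_spec (inhabits 0) (fun u => inI u /\ f u = t q)).
    destruct (rcont_IVT f 0 1 (t q) Hfc) as [u [Hu1 Hu2]]; try (unfold inI in *; lra).
    exists u; split; auto; unfold inI; lra. }
  exists s. split; [|intros q Hq; apply Hs; auto].
  split; [auto|]. split; [reflexivity|]. split.
  - unfold s. destruct (Nat.eqb_spec m 0); [lia|]. rewrite Nat.eqb_refl; auto.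
  - intros k Hk. destruct (Hs k ltac:(lia)) as [Hk1 Hk2].
    destruct (Hs (S k) ltac:(lia)) as [Hk3 Hk4].
    destruct (Rlt_le_dec (s k) (s (S k))) as [|Hle]; auto.
    pose proof (Hfm _ _ Hk3 Hk1 Hle). specialize (Hinc k Hk). lra.
Qed.

Lemma zeta_monotone_lifts n x f : (0 < n)%nat -> in_F n x -> in_Mon f ->
  monotone_lifts n (zeta n x f).
Proof.
  intros Hn HF HM j Hj. pose proof HM as [Hfc [Hfm [Hf0 Hf1]]]. unfold zeta.
  split; [|split; [|split]].
  - eapply rcont_lip; [| apply pi_map_lip | auto].
    pose proof (pos_INR n); pose proof (pos_INR (pd_m x)); nra.
  - intros u w Hu Hw Huw. apply (pi_map_mono n x HF); auto.
  - rewrite Hf0. apply (pi_map_0 n x HF).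
  - rewrite Hf1. apply (pi_map_1 n x HF); auto.
Qed.

Lemma zeta_special_structure n x f : (0 < n)%nat -> in_F n x -> in_Mon f ->
  exists s, subdivision (pd_m x) s /\ special_structure n (zeta n x f) (pd_m x) s (pd_lab x).
Proof.
  intros Hn HF HM. pose proof HM as [_ [Hfm _]].
  destruct (pullback_subdivision f (pd_m x) (pd_t x) HM (proj1 HF)) as [s [Hs Hfs]].
  exists s. split; [auto|]. split; [apply HF|].
  intros q j Hq Hj Hne u Hu. unfold zeta.
  pose proof (wsub_I _ _ (subdivision_weak _ _ Hs) q ltac:(lia)) as Hq1.
  pose proof (wsub_I _ _ (subdivision_weak _ _ Hs) (S q) ltac:(lia)) as Hq2.
  assert (HuI : inI u) by (unfold inI in *; lra).
  pose proof (Hfm _ _ Hq1 HuI ltac:(lra)). pose proof (Hfm _ _ HuI Hq2 ltac:(lra)).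
  rewrite Hfs by lia. apply (pi_map_flat n x HF j (f u) q); auto.
  rewrite <- !Hfs by lia. lra.
Qed.

(* The monotone map is the average
   avg u = (1/n) sum_j H u j of the lifts; on [s q, s (q+1)] only H . (sp q)
   moves, so avg grows there by 1/n of its growth.  Collapsing the intervals
   on which avg is constant gives the partition x with nodes avg (s q) and
   labels sp q; then pi_j(avg u) = H u j. *)
Section Collapse.
Variables (n : nat) (H : R -> nat -> R) (m : nat) (s : nat -> R) (sp : nat -> nat).
Hypothesis Hn : (0 < n)%nat.
Hypothesis HL : monotone_lifts n H.
Hypothesis HS : wsubdivision m s.
Hypothesis HT : special_structure n H m s sp.
Hypothesis HN : active_noncrossing H m s sp.

Definition avg (u : R) : R := rsum (H u) n / INR n.
Definition node (k : nat) : R := avg (s k).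

Lemma INR_n_pos : 0 < INR n.
Proof. apply lt_0_INR; auto. Qed.

Lemma avg_increment q u w j : (q < m)%nat -> (j < n)%nat ->
  s q <= u <= s (S q) -> s q <= w <= s (S q) ->
  INR n * (if Nat.eqb (sp q) j then avg u - avg w else 0) = H u j - H w j.
Proof.
  intros Hq Hj Hu Hw. destruct HT as [Hsp Hc].
  assert (Hd : INR n * (avg u - avg w) = H u (sp q) - H w (sp q)).
  { unfold avg. field_simplify; [|apply not_0_INR; lia].
    rewrite <- rsum_minus. apply (rsum_single (fun k => H u k - H w k)); auto.
    intros i Hi Hne. rewrite (Hc q i Hq Hi Hne u Hu), (Hc q i Hq Hi Hne w Hw). ring. }
  destruct (Nat.eqb_spec (sp q) j) as [<-|Hne]; auto.
  rewrite (Hc q j Hq Hj (not_eq_sym Hne) u Hu), (Hc q j Hq Hj (not_eq_sym Hne) w Hw). ring.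
Qed.

Lemma avg_mono u w : inI u -> inI w -> u <= w -> avg u <= avg w.
Proof.
  intros Hu Hw Huw. unfold avg. apply Rmult_le_compat_r.
  - left; apply Rinv_0_lt_compat, INR_n_pos.
  - apply rsum_le. intros j Hj. apply (HL j Hj); auto.
Qed.

Lemma avg_0 : avg 0 = 0.
Proof. unfold avg. rewrite rsum_zero; [unfold Rdiv; ring|]. intros j Hj; apply (HL j Hj). Qed.

Lemma avg_1 : avg 1 = 1.
Proof.
  unfold avg. rewrite (rsum_ext _ (fun _ => 1)), rsum_const.
  - field. apply not_0_INR; lia.
  - intros j Hj; apply (HL j Hj).
Qed.

Lemma avg_Mon : in_Mon avg.
Proof.
  split; [|split; [|split]];
    [|intros u w Hu Hw Huw; apply avg_mono; auto | apply avg_0 | apply avg_1].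
  unfold avg, Rdiv. pose proof (Rinv_0_lt_compat _ INR_n_pos).
  apply (rcont_lip (fun r => r * / INR n) (/ INR n + 1)); [lra| |].
  - intros u w. replace (u * / INR n - w * / INR n) with (/ INR n * (u - w)) by ring.
    rewrite Rabs_mult, Rabs_right by lra. pose proof (Rabs_pos (u - w)). nra.
  - apply rcont_rsum. intros i Hi; apply (HL i Hi).
Qed.

Lemma node_step k : (k < m)%nat -> node k <= node (S k).
Proof. intros Hk. apply avg_mono; try apply (wsub_I m s HS); try lia. apply HS; auto. Qed.

Lemma node_0 : node 0 = 0.
Proof. unfold node. destruct HS as [_ [-> _]]. apply avg_0. Qed.

Lemma node_m : node m = 1.
Proof. unfold node. destruct HS as [_ [_ [-> _]]]. apply avg_1. Qed.

Lemma node_active q : (q < m)%nat -> node q < node (S q) ->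
  H (s q) (sp q) < H (s (S q)) (sp q).
Proof.
  intros Hq Hlt. pose proof (proj2 (proj2 (proj2 HS)) q Hq).
  pose proof (avg_increment q (s (S q)) (s q) (sp q) Hq (proj1 HT q Hq) ltac:(lra) ltac:(lra)) as E.
  rewrite Nat.eqb_refl in E. unfold node in Hlt. pose proof INR_n_pos.
  assert (0 < INR n * (avg (s (S q)) - avg (s q))) by nra. lra.
Qed.

Definition active (k : nat) : bool := if Rlt_dec (node k) (node (S k)) then true else false.

Lemma active_true k : active k = true -> node k < node (S k).
Proof. unfold active; destruct Rlt_dec; congruence. Qed.

Lemma active_false k : (k < m)%nat -> active k = false -> node k = node (S k).
Proof.
  unfold active; destruct Rlt_dec; try congruence. intros Hk _. pose proof (node_step k Hk). lra.
Qed.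

Fixpoint rank (k : nat) : nat :=
  match k with O => O | S k' => (rank k' + (if active k' then 1 else 0))%nat end.

Definition num_active := rank m.

Lemma rank_mono p q : (p <= q)%nat -> (rank p <= rank q)%nat.
Proof.
  induction q as [|q IH]; intros Hpq; [replace p with 0%nat by lia; auto|].
  destruct (Nat.eq_dec p (S q)) as [->|Hne]; auto. simpl. specialize (IH ltac:(lia)). lia.
Qed.

Lemma rank_S_active q : active q = true -> rank (S q) = S (rank q).
Proof. intros E. simpl. rewrite E. lia. Qed.

Lemma rank_node_le p q : (p <= q)%nat -> (q <= m)%nat -> rank p = rank q -> node p = node q.
Proof.
  induction q as [|q IH]; intros Hpq Hq Hc; [replace p with 0%nat by lia; auto|].
  destruct (Nat.eq_dec p (S q)) as [->|Hne]; auto.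
  simpl in Hc. pose proof (rank_mono p q ltac:(lia)).
  destruct (active q) eqn:E; [lia|].
  rewrite <- (active_false q) by (auto; lia). apply IH; lia.
Qed.

Lemma rank_node p q : (p <= m)%nat -> (q <= m)%nat -> rank p = rank q -> node p = node q.
Proof.
  intros Hp Hq Hc. destruct (le_lt_dec p q); [apply rank_node_le; auto|].
  symmetry; apply rank_node_le; auto; lia.
Qed.

Lemma rank_active_inj q q' : active q = true -> active q' = true -> rank q = rank q' -> q = q'.
Proof.
  intros Hq Hq' Hc. destruct (lt_eq_lt_dec q q') as [[Hlt|]|Hgt]; auto.
  - pose proof (rank_mono (S q) q' Hlt) as Hr. rewrite rank_S_active in Hr by auto. lia.
  - pose proof (rank_mono (S q') q Hgt) as Hr. rewrite rank_S_active in Hr by auto. lia.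
Qed.

Lemma rank_reached K p : (K < rank p)%nat -> exists q, (q < p)%nat /\ active q = true /\ rank q = K.
Proof.
  induction p as [|p IH]; simpl; intros HK; [lia|].
  destruct (le_lt_dec (rank p) K).
  - destruct (active p) eqn:E; [|lia]. exists p. repeat split; auto; lia.
  - destruct (IH l) as [q [? [? ?]]]. exists q; repeat split; auto.
Qed.

Definition nth_active (K : nat) : nat :=
  epsilon (inhabits 0%nat) (fun q => (q < m)%nat /\ active q = true /\ rank q = K).

Lemma nth_active_spec K : (K < num_active)%nat ->
  (nth_active K < m)%nat /\ active (nth_active K) = true /\ rank (nth_active K) = K.
Proof.
  intros HK.
  apply (epsilon_spec (inhabits 0%nat) (fun q => (q < m)%nat /\ active q = true /\ rank q = K)).
  apply rank_reached; auto.
Qed.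

Lemma nth_active_rank q : (q < m)%nat -> active q = true -> nth_active (rank q) = q.
Proof.
  intros Hq Ha. assert (rank q < num_active)%nat.
  { unfold num_active. pose proof (rank_mono (S q) m Hq) as Hr.
    rewrite rank_S_active in Hr by auto. lia. }
  destruct (nth_active_spec (rank q)) as [? [? ?]]; auto. apply rank_active_inj; auto.
Qed.

Lemma nth_active_smono K K' : (K < K')%nat -> (K' < num_active)%nat ->
  (nth_active K < nth_active K')%nat.
Proof.
  intros. destruct (nth_active_spec K ltac:(lia)) as [? [? E]].
  destruct (nth_active_spec K' ltac:(lia)) as [? [? E']].
  destruct (le_lt_dec (nth_active K') (nth_active K)) as [Hle|]; auto.
  pose proof (rank_mono _ _ Hle). lia.
Qed.

Lemma sum_over_active (G : nat -> R) : (forall q, (q < m)%nat -> active q = false -> G q = 0) ->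
  forall p, (p <= m)%nat -> rsum (fun K => G (nth_active K)) (rank p) = rsum G p.
Proof.
  intros HG. induction p as [|p IH]; intros Hp; simpl; auto.
  destruct (active p) eqn:E.
  - rewrite Nat.add_1_r. simpl. rewrite IH by lia. rewrite nth_active_rank by (auto; lia). auto.
  - rewrite Nat.add_0_r, IH, HG by (auto; lia). ring.
Qed.

Definition collapsed_node (K : nat) : R := if Nat.ltb K num_active then node (nth_active K) else 1.

Definition collapsed_partition : part_data :=
  PD num_active collapsed_node (fun K => sp (nth_active K)).

Lemma collapsed_node_lt K : (K < num_active)%nat -> collapsed_node K = node (nth_active K).
Proof. intros. unfold collapsed_node. destruct (Nat.ltb_spec K num_active); auto; lia. Qed.

Lemma collapsed_node_S K : (K < num_active)%nat -> collapsed_node (S K) = node (S (nth_active K)).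
Proof.
  intros HK. destruct (nth_active_spec K HK) as [Hi [Ha Hc]]. unfold collapsed_node.
  destruct (Nat.ltb_spec (S K) num_active).
  - destruct (nth_active_spec (S K)) as [Hi' [Ha' Hc']]; auto.
    apply rank_node; try lia. rewrite Hc', rank_S_active; auto.
  - rewrite <- node_m. apply rank_node; try lia. rewrite rank_S_active; auto.
    unfold num_active in *.
    pose proof (rank_mono (S (nth_active K)) m Hi) as Hr. rewrite rank_S_active in Hr by auto. lia.
Qed.

Lemma num_active_pos : (0 < num_active)%nat.
Proof.
  destruct (Nat.eq_dec num_active 0) as [E|]; [|lia]. exfalso.
  pose proof (rank_node 0 m ltac:(lia) ltac:(lia)) as Hn0. rewrite node_0, node_m in Hn0.
  unfold num_active in E. simpl in Hn0. specialize (Hn0 ltac:(lia)). lra.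
Qed.

Lemma collapsed_subdivision : subdivision num_active collapsed_node.
Proof.
  split; [apply num_active_pos|]. split; [|split].
  - rewrite collapsed_node_lt by apply num_active_pos.
    destruct (nth_active_spec 0 num_active_pos) as [? [? Hc]].
    rewrite <- node_0. apply rank_node; auto; lia.
  - unfold collapsed_node. destruct (Nat.ltb_spec num_active num_active); auto; lia.
  - intros K HK. rewrite collapsed_node_lt, collapsed_node_S by auto.
    destruct (nth_active_spec K HK) as [? [? ?]]. apply active_true; auto.
Qed.

(* Each piece has measure 1/n: its total length is (1/n) times the total
   increase of the corresponding lift, which is 1. *)
Lemma collapsed_measure j : (j < n)%nat -> piece_measure collapsed_partition j = 1 / INR n.
Proof.
  intros Hj. unfold piece_measure. simpl.
  set (G := fun q => if Nat.eqb (sp q) j then node (S q) - node q else 0).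
  assert (HG : forall q, (q < m)%nat -> INR n * G q = H (s (S q)) j - H (s q) j).
  { intros q Hq. pose proof (proj2 (proj2 (proj2 HS)) q Hq).
    apply avg_increment; auto; lra. }
  rewrite (rsum_ext _ (fun K => G (nth_active K))).
  - unfold num_active. rewrite (sum_over_active G); [|intros q Hq Ha; unfold G | lia].
    + apply (Rmult_eq_reg_l (INR n)); [|apply not_0_INR; lia].
      rewrite <- rsum_scal, (rsum_ext _ (fun q => H (s (S q)) j - H (s q) j)) by auto.
      rewrite (rsum_telescope (fun q => H (s q) j)). destruct HS as [_ [E0 [E1 _]]]. rewrite E0, E1.
      destruct (HL j Hj) as [_ [_ [-> ->]]]. field. apply not_0_INR; lia.
    + rewrite (active_false q) by auto. destruct Nat.eqb; ring.
  - intros K HK. unfold G, collapsed_partition; cbn [pd_t pd_lab].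
    rewrite collapsed_node_S, collapsed_node_lt; auto.
Qed.

Lemma collapsed_partial_sum u j : inI u -> (j < n)%nat ->
  forall p, (p <= m)%nat ->
  INR n * rsum (fun q => if Nat.eqb (sp q) j
                         then Rmin (avg u) (node (S q)) - Rmin (avg u) (node q) else 0) p
  = H (Rmin u (s p)) j.
Proof.
  intros Hu Hj. induction p as [|p IH]; intros Hp.
  - simpl. destruct HS as [_ [-> _]]. rewrite Rmin_right by (unfold inI in Hu; lra).
    destruct (HL j Hj) as [_ [_ [-> _]]]. ring.
  - simpl rsum. rewrite Rmult_plus_distr_l, IH by lia.
    pose proof (proj2 (proj2 (proj2 HS)) p ltac:(lia)).
    pose proof (wsub_I m s HS p ltac:(lia)). pose proof (wsub_I m s HS (S p) ltac:(lia)).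
    pose proof (node_step p ltac:(lia)). unfold node in *.
    destruct (Rle_dec (s (S p)) u).
    + assert (avg (s (S p)) <= avg u) by (apply avg_mono; auto).
      rewrite !Rmin_right by lra.
      rewrite (avg_increment p (s (S p)) (s p) j) by (try lia; lra). ring.
    + destruct (Rle_dec u (s p)).
      * assert (avg u <= avg (s p)) by (apply avg_mono; auto).
        rewrite !Rmin_left by lra. destruct Nat.eqb; ring.
      * assert (avg u <= avg (s (S p))) by (apply avg_mono; auto; lra).
        assert (avg (s p) <= avg u) by (apply avg_mono; auto; lra).
        rewrite (Rmin_left u (s (S p))), (Rmin_right u (s p)) by lra.
        rewrite (Rmin_left (avg u) (avg (s (S p)))), (Rmin_right (avg u) (avg (s p))) by lra.
        rewrite (avg_increment p u (s p) j) by (try lia; lra). ring.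
Qed.

Lemma collapsed_pi u j : inI u -> (j < n)%nat -> pi_map n collapsed_partition j (avg u) = H u j.
Proof.
  intros Hu Hj. rewrite pi_map_pterm. simpl.
  set (G := fun q => if Nat.eqb (sp q) j
                     then Rmin (avg u) (node (S q)) - Rmin (avg u) (node q) else 0).
  rewrite (rsum_ext _ (fun K => G (nth_active K))).
  2:{ intros K HK. unfold pterm, G. simpl. rewrite collapsed_node_S, collapsed_node_lt; auto. }
  unfold num_active. rewrite (sum_over_active G).
  - unfold G. rewrite collapsed_partial_sum by auto. destruct HS as [_ [_ [-> _]]].
    rewrite Rmin_left; auto. unfold inI in Hu; lra.
  - intros q Hq Ha. unfold G. rewrite (active_false q) by auto. destruct Nat.eqb; ring.
  - lia.
Qed.

Lemma collapsed_noncrossing : noncrossing num_active (fun K => sp (nth_active K)).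
Proof.
  intros a b c d Hab Hbc Hcd Hd.
  destruct (nth_active_spec a ltac:(lia)) as [? [Aa _]].
  destruct (nth_active_spec b ltac:(lia)) as [? [Ab _]].
  destruct (nth_active_spec c ltac:(lia)) as [? [Ac _]].
  destruct (nth_active_spec d ltac:(lia)) as [? [Ad _]].
  apply HN; try (apply nth_active_smono; lia); auto;
    apply node_active; auto; apply active_true; auto.
Qed.

Lemma collapsed_in_F : in_F n collapsed_partition.
Proof.
  apply in_F_of_labels.
  - apply collapsed_subdivision.
  - intros k Hk. apply HT. apply nth_active_spec; auto.
  - apply collapsed_measure.
  - apply collapsed_noncrossing.
Qed.

End Collapse.

Lemma image_of_lift_data n g H m s sp : (0 < n)%nat ->
  monotone_lifts n H -> wsubdivision m s -> special_structure n H m s sp ->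
  active_noncrossing H m s sp -> represents n g H -> in_image n g.
Proof.
  intros Hn HL HS HT HN Hg. right.
  exists (collapsed_partition n H m s sp), (avg n H). split; [|split].
  - apply collapsed_in_F; auto.
  - apply avg_Mon; auto.
  - intros t Ht j Hj. unfold zeta. rewrite collapsed_pi; auto.
Qed.

Lemma image_lift_data n g : (0 < n)%nat -> in_image n g ->
  exists H m s sp, monotone_lifts n H /\ subdivision m s /\
    special_structure n H m s sp /\ noncrossing m sp /\ represents n g H.
Proof.
  intros Hn [->|[x [f [HF [HM Heq]]]]]; [lia|].
  destruct (zeta_special_structure n x f Hn HF HM) as [s [HS HT]].
  exists (zeta n x f), (pd_m x), s, (pd_lab x).
  split; [apply zeta_monotone_lifts; auto|]. split; [auto|]. split; [auto|].
  split; [apply (labels_noncrossing n x HF)|auto].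
Qed.

Lemma based_map_of_lifts n g H : monotone_lifts n H -> represents n g H -> is_based_map n g.
Proof.
  intros HL Hg i Hi. destruct (HL i Hi) as [Hc [_ [H0 H1]]]. split; [|split].
  - intros t Ht e He. destruct (Hc t Ht e He) as [d [Hd P]]. exists d; split; auto.
    intros u Hu Hut. specialize (P u Hu Hut).
    destruct (Hg u Hu i Hi) as [k1 E1]. destruct (Hg t Ht i Hi) as [k2 E2].
    exists (k1 - k2)%Z. rewrite minus_IZR.
    replace (g u i - g t i - (IZR k1 - IZR k2)) with (H u i - H t i) by lra. exact P.
  - eapply ceq_trans; [apply Hg; [unfold inI; lra|auto]|]. rewrite H0. apply ceq_refl.
  - eapply ceq_trans; [apply Hg; [unfold inI; lra|auto]|]. rewrite H1. apply ceq_10.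
Qed.

Lemma cond1_of_lifts n g H : monotone_lifts n H -> represents n g H -> cond1 n g.
Proof.
  intros HL Hg i Hi. exists (fun t => H t i). destruct (HL i Hi) as [Hc [Hm [H0 H1]]].
  repeat split; auto. intros t Ht. apply ceq_sym, Hg; auto.
Qed.

Lemma cond23_of_lift_data n g H m s sp : subdivision m s -> special_structure n H m s sp ->
  noncrossing m sp -> represents n g H -> cond23 n g.
Proof.
  intros HS [Hsp Hc] HN Hg. exists m, s, sp. repeat split; auto; try apply HS.
  intros k i Hk Hi Hne u Hu.
  pose proof (wsub_I _ _ (subdivision_weak _ _ HS) k ltac:(lia)).
  pose proof (wsub_I _ _ (subdivision_weak _ _ HS) (S k) ltac:(lia)).
  assert (inI u) by (unfold inI in *; lra).
  eapply ceq_trans; [apply Hg; auto|]. rewrite (Hc k i Hk Hi Hne u Hu). apply ceq_sym, Hg; auto.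
Qed.

(* From conditions (1)-(3) to lift data: lifts are chosen by (1), and by
   lift_constant they are constant where (2) makes the circle maps constant. *)
Lemma choose_lifts n g : cond1 n g -> exists H, monotone_lifts n H /\ represents n g H.
Proof.
  intros H1.
  set (P j (h : R -> R) := rcont h /\ nondecr h /\ h 0 = 0 /\ h 1 = 1 /\
                           forall t, inI t -> ceq (h t) (g t j)).
  set (H t j := epsilon (inhabits (fun _ : R => 0)) (P j) t).
  assert (HP : forall j, (j < n)%nat -> P j (fun t => H t j)).
  { intros j Hj. apply (epsilon_spec (inhabits (fun _ : R => 0)) (P j)). apply H1; auto. }
  exists H. split.
  - intros j Hj. destruct (HP j Hj) as [? [? [? [? ?]]]]. repeat split; auto.
  - intros t Ht j Hj. apply ceq_sym. apply (HP j Hj); auto.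
Qed.

Lemma special_structure_of_cond23 n g H m s sp : monotone_lifts n H -> represents n g H ->
  subdivision m s -> (forall k, (k < m)%nat -> (sp k < n)%nat) ->
  (forall k i, (k < m)%nat -> (i < n)%nat -> i <> sp k ->
     forall u, s k <= u <= s (S k) -> ceq (g u i) (g (s k) i)) ->
  special_structure n H m s sp.
Proof.
  intros HL Hg HS Hsp Hc. split; auto. intros q j Hq Hj Hne u Hu.
  pose proof (wsub_I _ _ (subdivision_weak _ _ HS) q ltac:(lia)).
  pose proof (wsub_I _ _ (subdivision_weak _ _ HS) (S q) ltac:(lia)).
  apply (lift_constant (fun t => H t j) (s q) (s (S q))); auto; [apply (HL j Hj)|].
  intros w Hw. assert (inI w) by (unfold inI in *; lra).
  eapply ceq_trans; [apply ceq_sym, Hg; auto|].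
  eapply ceq_trans; [apply (Hc q j Hq Hj Hne w Hw)|]. apply Hg; auto.
Qed.

Lemma image_characterisation n g : (0 < n)%nat ->
  (in_image n g <-> is_based_map n g /\ cond1 n g /\ cond23 n g).
Proof.
  intros Hn; split.
  - intros Hi. destruct (image_lift_data n g Hn Hi) as [H [m [s [sp [HL [HS [HT [HN Hg]]]]]]]].
    split; [|split].
    + apply (based_map_of_lifts n g H); auto.
    + apply (cond1_of_lifts n g H); auto.
    + apply (cond23_of_lift_data n g H m s sp); auto.
  - intros [_ [H1 [m [s [sp [HS [Hsp [Hc HN]]]]]]]].
    destruct (choose_lifts n g H1) as [H [HL Hg]].
    apply (image_of_lift_data n g H m s sp); auto.
    + apply subdivision_weak; auto.
    + apply (special_structure_of_cond23 n g); auto.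
    + apply noncrossing_active; auto.
Qed.

Lemma id_image : in_image 1 id_op.
Proof.
  apply (image_of_lift_data 1 id_op (fun t _ => t) 1 INR (fun _ => 0%nat)); auto.
  - intros j Hj. repeat split; auto.
    + intros t Ht e He. exists e; split; auto.
    + intros u w _ _ Huw; auto.
  - repeat split; auto. intros k Hk. replace k with 0%nat by lia. simpl; lra.
  - split; auto. intros q j Hq Hj Hne. lia.
  - intros a b c d ? ? ? ?. lia.
  - intros t Ht j Hj. apply ceq_refl.
Qed.

(* The new
   special index sp' q must be the preimage of sp q whenever there is one;
   intervals whose special coordinate is forgotten become inactive. *)
Lemma reindex_lift_data n n' H m s sp (J sp' : nat -> nat) :
  monotone_lifts n H -> wsubdivision m s -> special_structure n H m s sp -> noncrossing m sp ->
  (forall p, (p < n')%nat -> (J p < n)%nat) ->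
  (forall p p', (p < n')%nat -> (p' < n')%nat -> J p = J p' -> p = p') ->
  (forall q, (q < m)%nat -> (sp' q < n')%nat) ->
  (forall q p, (q < m)%nat -> (p < n')%nat -> J p = sp q -> sp' q = p) ->
  let H' := fun t p => H t (J p) in
  monotone_lifts n' H' /\ special_structure n' H' m s sp' /\ active_noncrossing H' m s sp'.
Proof.
  intros HL HS [Hsp HT] HN HJ Hinj Hsp' Hpre H'.
  assert (Hflat : forall q p, (q < m)%nat -> (p < n')%nat -> p <> sp' q ->
            forall u, s q <= u <= s (S q) -> H' u p = H' (s q) p).
  { intros q p Hq Hp Hne u Hu. apply HT; auto. intro E. apply Hne. symmetry; auto. }
  split; [intros p Hp; apply HL; auto|]. split; [split; auto|].
  assert (Hact : forall q, (q < m)%nat -> H' (s q) (sp' q) < H' (s (S q)) (sp' q) ->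
            J (sp' q) = sp q).
  { intros q Hq Hlt. destruct (Nat.eq_dec (J (sp' q)) (sp q)) as [|Hne]; auto. exfalso.
    pose proof (proj2 (proj2 (proj2 HS)) q Hq).
    unfold H' in Hlt. rewrite (HT q (J (sp' q)) Hq (HJ _ (Hsp' q Hq)) Hne (s (S q))) in Hlt by lra.
    lra. }
  intros a b c d ? ? ? ? Aa Ab Ac Ad [E1 [E2 E3]].
  apply (HN a b c d); auto.
  rewrite <- (Hact a), <- (Hact b), <- (Hact c), <- (Hact d) by (auto; lia).
  split; [congruence|]. split; [congruence|].
  intro E. apply E3. apply Hinj; auto; apply Hsp'; lia.
Qed.

(* Equivariance: permuting coordinates is reindexing along a bijection. *)
Lemma perm_image n sigma g : is_perm n sigma -> in_image n g -> in_image n (perm_act g sigma).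
Proof.
  intros [Hb Hi] Hg. destruct (Nat.eq_dec n 0) as [->|Hn]; [left; auto|].
  destruct (image_lift_data n g ltac:(lia) Hg) as [H [m [s [sp [HL [HS [HT [HN Hrep]]]]]]]].
  assert (Hsurj : FinFun.bSurjective n sigma) by (apply FinFun.bInjective_bSurjective; auto).
  set (inv y := epsilon (inhabits 0%nat) (fun p => (p < n)%nat /\ sigma p = y)).
  assert (Hinv : forall y, (y < n)%nat -> (inv y < n)%nat /\ sigma (inv y) = y).
  { intros y Hy. apply (epsilon_spec (inhabits 0%nat) (fun p => (p < n)%nat /\ sigma p = y)).
    apply Hsurj; auto. }
  destruct (reindex_lift_data n n H m s sp sigma (fun q => inv (sp q))) as [HL' [HT' HN']]; auto.
  - apply subdivision_weak; auto.
  - intros q Hq. apply Hinv, HT; auto.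
  - intros q p Hq Hp E. apply Hi; auto; [apply Hinv, HT; auto|].
    rewrite E. apply Hinv, HT; auto.
  - apply (image_of_lift_data n _ (fun t p => H t (sigma p)) m s (fun q => inv (sp q)));
      auto; [lia|apply subdivision_weak; auto|].
    intros t Ht p Hp. apply Hrep; auto.
Qed.

(* Composition with an operation of arity 0 forgets the coordinate i. *)
Lemma comp0_image k i f g : (i < k)%nat -> in_image k f -> in_image (k + 0 - 1) (comp_op k 0 i f g).
Proof.
  intros Hik Hf. destruct (Nat.eq_dec k 1) as [->|Hk1]; [left; lia|].
  destruct (image_lift_data k f ltac:(lia) Hf) as [H [m [s [sp [HL [HS [HT [HN Hrep]]]]]]]].
  set (J p := if Nat.ltb p i then p else S p).
  set (sp' q := if Nat.ltb (sp q) i then sp q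
                else if Nat.eqb (sp q) i then 0%nat else (sp q - 1)%nat).
  pose proof (proj1 HT) as Hsp.
  destruct (reindex_lift_data k (k + 0 - 1) H m s sp J sp') as [HL' [HT' HN']]; auto.
  - apply subdivision_weak; auto.
  - intros p Hp. unfold J. destruct (Nat.ltb_spec p i); lia.
  - intros p p' Hp Hp'. unfold J. destruct (Nat.ltb_spec p i), (Nat.ltb_spec p' i); lia.
  - intros q Hq. specialize (Hsp q Hq). unfold sp'.
    destruct (Nat.ltb_spec (sp q) i); [lia|]. destruct (Nat.eqb_spec (sp q) i); lia.
  - intros q p Hq Hp. unfold J, sp'. destruct (Nat.ltb_spec p i) as [Hpi|Hpi]; intros <-.
    + destruct (Nat.ltb_spec p i); lia.
    + destruct (Nat.ltb_spec (S p) i); [lia|]. destruct (Nat.eqb_spec (S p) i); lia.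
  - apply (image_of_lift_data _ _ (fun t p => H t (J p)) m s sp');
      auto; [lia|apply subdivision_weak; auto|].
    intros t Ht p Hp. unfold comp_op, J.
    destruct (Nat.ltb_spec p i); [apply Hrep; auto; lia|].
    destruct (Nat.ltb_spec p (i + 0)); [lia|].
    replace (p - 0 + 1)%nat with (S p) by lia. apply Hrep; auto; lia.
Qed.

(* Each interval q of f is refined by pulling back, along
   the i-th lift of f, the subdivision of g clamped to the range of that lift
   on q; the special index of a refined interval is that of f, except inside
   intervals where coordinate i moves, where it is i + (the special index of
   g). *)

Lemma clamp_between a b y y' : a <= b -> y <= y' -> Rmax a (Rmin b y) < Rmax a (Rmin b y') ->
  y <= Rmax a (Rmin b y) /\ Rmax a (Rmin b y') <= y'.
Proof. intros. unfold Rmax, Rmin in *. repeat destruct Rle_dec; lra. Qed.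

(* Refined intervals are indexed by N = q * m2 + r. *)
Lemma div_mod_succ m2 N : (0 < m2)%nat ->
  ((S (N mod m2) < m2)%nat -> (S N / m2 = N / m2)%nat /\ (S N mod m2 = S (N mod m2))%nat) /\
  ((S (N mod m2) = m2)%nat -> (S N / m2 = S (N / m2))%nat /\ (S N mod m2 = 0)%nat).
Proof.
  intros Hm. pose proof (Nat.div_mod N m2 ltac:(lia)). split; intros Hr.
  - split; [symmetry; apply (Nat.div_unique _ _ _ (S (N mod m2))); auto; lia|
            symmetry; apply (Nat.mod_unique _ _ (N / m2)); auto; lia].
  - split; [symmetry; apply (Nat.div_unique _ _ _ 0); auto; lia|
            symmetry; apply (Nat.mod_unique _ _ (S (N / m2))); auto; lia].
Qed.

Definition comp_lift (l i : nat) (H K : R -> nat -> R) (t : R) (p : nat) : R :=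
  if Nat.ltb p i then H t p
  else if Nat.ltb p (i + l) then K (H t i) (p - i)%nat else H t (p - l + 1)%nat.

Lemma comp_lift_lo l i H K t p : (p < i)%nat -> comp_lift l i H K t p = H t p.
Proof. intros. unfold comp_lift. destruct (Nat.ltb_spec p i); auto; lia. Qed.

Lemma comp_lift_mid l i H K t p : (i <= p)%nat -> (p < i + l)%nat ->
  comp_lift l i H K t p = K (H t i) (p - i)%nat.
Proof.
  intros. unfold comp_lift. destruct (Nat.ltb_spec p i); try lia.
  destruct (Nat.ltb_spec p (i + l)); auto; lia.
Qed.

Lemma comp_lift_hi l i H K t p : (i + l <= p)%nat ->
  comp_lift l i H K t p = H t (p - l + 1)%nat.
Proof.
  intros. unfold comp_lift. destruct (Nat.ltb_spec p i); try lia.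
  destruct (Nat.ltb_spec p (i + l)); auto; lia.
Qed.

Lemma monotone_lift_ext (h h' : R -> R) : (forall t, h' t = h t) ->
  rcont h /\ nondecr h /\ h 0 = 0 /\ h 1 = 1 -> rcont h' /\ nondecr h' /\ h' 0 = 0 /\ h' 1 = 1.
Proof.
  intros E [A [B [C D]]]. repeat split; rewrite ?E; auto.
  - intros t Ht e He. destruct (A t Ht e He) as [d [Hd P]]. exists d; split; auto.
    intros. rewrite !E; auto.
  - intros u w Hu Hw Huw. rewrite !E. apply B; auto.
Qed.

Section Composition.
Variables k l i : nat.
Hypothesis Hik : (i < k)%nat.
Hypothesis Hl : (0 < l)%nat.
Variables (H : R -> nat -> R) (m1 : nat) (s1 : nat -> R) (lab1 : nat -> nat).
Hypothesis HL1 : monotone_lifts k H.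
Hypothesis HS1 : wsubdivision m1 s1.
Hypothesis HT1 : special_structure k H m1 s1 lab1.
Hypothesis HN1 : noncrossing m1 lab1.
Variables (K : R -> nat -> R) (m2 : nat) (s2 : nat -> R) (lab2 : nat -> nat).
Hypothesis HL2 : monotone_lifts l K.
Hypothesis HS2 : wsubdivision m2 s2.
Hypothesis HT2 : special_structure l K m2 s2 lab2.
Hypothesis HN2 : noncrossing m2 lab2.

Lemma comp_lift_monotone : monotone_lifts (k + l - 1) (comp_lift l i H K).
Proof.
  intros p Hp. destruct (lt_dec p i); [|destruct (lt_dec p (i + l))].
  - apply (monotone_lift_ext (fun t => H t p)); [intros; apply comp_lift_lo; auto | apply HL1; lia].
  - apply (monotone_lift_ext (fun t => K (H t i) (p - i))); [intros; apply comp_lift_mid; lia|].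
    destruct (HL2 (p - i)%nat ltac:(lia)) as [A [B [C D]]].
    destruct (HL1 i Hik) as [A1 [B1 [C1 D1]]]. simpl in C1, D1. repeat split.
    + apply (rcont_comp (fun v => K v (p - i)%nat) (fun t => H t i)); auto.
      intros; apply (monotone_lifts_I k H); auto.
    + intros u w Hu Hw Huw.
      apply B; [apply (monotone_lifts_I k H); auto.. | apply B1; auto].
    + rewrite C1. auto.
    + rewrite D1. auto.
  - apply (monotone_lift_ext (fun t => H t (p - l + 1)%nat)); [intros; apply comp_lift_hi; lia|].
    apply HL1; lia.
Qed.

Lemma m2_pos : (0 < m2)%nat.
Proof. apply HS2. Qed.

Lemma s1_I q : (q <= m1)%nat -> inI (s1 q).
Proof. apply (wsub_I m1 s1 HS1). Qed.

Lemma H_i_mono u w : inI u -> inI w -> u <= w -> H u i <= H w i.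
Proof. intros. apply (HL1 i Hik); auto. Qed.

Definition lo (q : nat) : R := H (s1 q) i.
Definition hi (q : nat) : R := H (s1 (S q)) i.

Definition level (q r : nat) : R := Rmax (lo q) (Rmin (hi q) (s2 r)).

Lemma lo_hi q : (q < m1)%nat -> 0 <= lo q <= hi q /\ hi q <= 1.
Proof.
  intros Hq. unfold lo, hi. pose proof (s1_I q ltac:(lia)). pose proof (s1_I (S q) ltac:(lia)).
  pose proof (monotone_lifts_I _ _ i (s1 q) HL1 Hik H0).
  pose proof (monotone_lifts_I _ _ i (s1 (S q)) HL1 Hik H1).
  pose proof (H_i_mono _ _ H0 H1 (proj2 (proj2 (proj2 HS1)) q Hq)). unfold inI in *. lra.
Qed.

Lemma level_range q r : (q < m1)%nat -> lo q <= level q r <= hi q.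
Proof.
  intros Hq. pose proof (lo_hi q Hq). unfold level, Rmax, Rmin. repeat destruct Rle_dec; lra.
Qed.

Definition preimage (q : nat) (c : R) : R :=
  if Rle_dec c (lo q) then s1 q else if Rle_dec (hi q) c then s1 (S q) else
  epsilon (inhabits 0) (fun u => s1 q <= u <= s1 (S q) /\ H u i = c).

Lemma preimage_spec q c : (q < m1)%nat -> lo q <= c <= hi q ->
  s1 q <= preimage q c <= s1 (S q) /\ H (preimage q c) i = c.
Proof.
  intros Hq Hc. pose proof (proj2 (proj2 (proj2 HS1)) q Hq).
  unfold preimage. destruct (Rle_dec c (lo q)); [split; [lra|unfold lo in *; lra]|].
  destruct (Rle_dec (hi q) c); [split; [lra|unfold hi in *; lra]|].
  apply (epsilon_spec (inhabits 0) (fun u => s1 q <= u <= s1 (S q) /\ H u i = c)).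
  destruct (rcont_IVT (fun u => H u i) (s1 q) (s1 (S q)) c) as [u [Hu1 Hu2]].
  - apply (HL1 i Hik).
  - apply s1_I; lia.
  - apply s1_I; lia.
  - lra.
  - unfold lo, hi in *; lra.
  - exists u; auto.
Qed.

Lemma preimage_mono q c c' : (q < m1)%nat -> lo q <= c <= hi q -> lo q <= c' <= hi q -> c <= c' ->
  preimage q c <= preimage q c'.
Proof.
  intros Hq Hc Hc' Hcc. destruct (Req_dec c c') as [->|Hne]; [lra|].
  destruct (Rle_dec (preimage q c) (preimage q c')) as [|Hn]; auto. exfalso.
  destruct (preimage_spec q c Hq Hc) as [P1 E1]. destruct (preimage_spec q c' Hq Hc') as [P2 E2].
  pose proof (s1_I q ltac:(lia)). pose proof (s1_I (S q) ltac:(lia)).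
  assert (I1 : inI (preimage q c)) by (unfold inI in *; lra).
  assert (I2 : inI (preimage q c')) by (unfold inI in *; lra).
  pose proof (H_i_mono _ _ I2 I1 ltac:(lra)). lra.
Qed.

Definition grid_point (q r : nat) : R :=
  if Nat.eqb r 0 then s1 q else if Nat.eqb r m2 then s1 (S q) else preimage q (level q r).

Lemma grid_point_spec q r : (q < m1)%nat -> (r <= m2)%nat ->
  s1 q <= grid_point q r <= s1 (S q) /\ H (grid_point q r) i = level q r.
Proof.
  intros Hq Hr. pose proof (proj2 (proj2 (proj2 HS1)) q Hq).
  pose proof (lo_hi q Hq). pose proof HS2 as [_ [E0 [E1 _]]].
  unfold grid_point, level. destruct (Nat.eqb_spec r 0) as [->|Hr0].
  - split; [lra|]. rewrite E0. fold (lo q). unfold Rmax, Rmin. repeat destruct Rle_dec; lra.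
  - destruct (Nat.eqb_spec r m2) as [->|Hrm].
    + split; [lra|]. rewrite E1. fold (hi q). unfold Rmax, Rmin. repeat destruct Rle_dec; lra.
    + apply preimage_spec; auto. apply level_range; auto.
Qed.

Lemma grid_point_step q r : (q < m1)%nat -> (r < m2)%nat -> grid_point q r <= grid_point q (S r).
Proof.
  intros Hq Hr. pose proof (grid_point_spec q r Hq ltac:(lia)) as [A1 _].
  pose proof (grid_point_spec q (S r) Hq ltac:(lia)) as [A2 _].
  destruct (Nat.eqb_spec r 0) as [->|H0]; [unfold grid_point at 1; simpl; lra|].
  destruct (Nat.eqb_spec (S r) m2) as [E|H1].
  { unfold grid_point at 2. rewrite E, Nat.eqb_refl. destruct m2; [lia|]. simpl Nat.eqb. lra. }
  unfold grid_point. rewrite (proj2 (Nat.eqb_neq r 0)), (proj2 (Nat.eqb_neq r m2)),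
    (proj2 (Nat.eqb_neq (S r) m2)) by lia. simpl Nat.eqb.
  apply preimage_mono; auto; try apply level_range; auto.
  pose proof (wsub_mono m2 s2 HS2 r (S r) ltac:(lia) ltac:(lia)).
  unfold level, Rmax, Rmin. repeat destruct Rle_dec; lra.
Qed.

Definition qo (N : nat) : nat := N / m2.
Definition ro (N : nat) : nat := N mod m2.
Definition refined_node (N : nat) : R := grid_point (qo N) (ro N).
Definition refined_special (N : nat) : nat :=
  if Nat.ltb (lab1 (qo N)) i then lab1 (qo N)
  else if Nat.eqb (lab1 (qo N)) i then (i + lab2 (ro N))%nat else (lab1 (qo N) + l - 1)%nat.

Lemma refined_interval N : (N < m1 * m2)%nat ->
  (qo N < m1)%nat /\ (ro N < m2)%nat /\ refined_node (S N) = grid_point (qo N) (S (ro N)).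
Proof.
  intros HN. pose proof m2_pos. unfold qo, ro.
  split; [apply Nat.Div0.div_lt_upper_bound; lia|]. split; [apply Nat.mod_upper_bound; lia|].
  destruct (div_mod_succ m2 N H0) as [G1 G2]. pose proof (Nat.mod_upper_bound N m2 ltac:(lia)).
  unfold refined_node, qo, ro. destruct (Nat.eq_dec (S (N mod m2)) m2) as [E|Ne].
  - destruct (G2 E) as [-> ->]. unfold grid_point. rewrite E. simpl Nat.eqb. rewrite Nat.eqb_refl.
    destruct m2; [lia|]. reflexivity.
  - destruct (G1 ltac:(lia)) as [-> ->]. reflexivity.
Qed.

Lemma refined_interval_spec N : (N < m1 * m2)%nat ->
  s1 (qo N) <= refined_node N /\ refined_node N <= refined_node (S N) /\
  refined_node (S N) <= s1 (S (qo N)) /\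
  H (refined_node N) i = level (qo N) (ro N) /\ H (refined_node (S N)) i = level (qo N) (S (ro N)).
Proof.
  intros HN. destruct (refined_interval N HN) as [Hq [Hr E]]. rewrite E. unfold refined_node.
  destruct (grid_point_spec (qo N) (ro N) Hq ltac:(lia)).
  destruct (grid_point_spec (qo N) (S (ro N)) Hq ltac:(lia)).
  pose proof (grid_point_step (qo N) (ro N) Hq Hr). repeat split; auto; lra.
Qed.

Lemma refined_wsubdivision : wsubdivision (m1 * m2) refined_node.
Proof.
  pose proof m2_pos. pose proof HS1 as [Hm1 [E0 [E1 _]]]. split; [|split; [|split]].
  - apply Nat.mul_pos_pos; lia.
  - unfold refined_node, qo, ro. rewrite Nat.Div0.div_0_l, Nat.Div0.mod_0_l.
    unfold grid_point. simpl. auto.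
  - unfold refined_node, qo, ro. rewrite Nat.div_mul, Nat.Div0.mod_mul by lia.
    unfold grid_point. simpl. auto.
  - intros N HN. apply (refined_interval_spec N HN).
Qed.

Lemma refined_special_lt N : (N < m1 * m2)%nat -> (refined_special N < k + l - 1)%nat.
Proof.
  intros HN. destruct (refined_interval N HN) as [Hq [Hr _]]. unfold refined_special.
  pose proof (proj1 HT1 _ Hq). pose proof (proj1 HT2 _ Hr).
  destruct (Nat.ltb_spec (lab1 (qo N)) i); try lia. destruct (Nat.eqb_spec (lab1 (qo N)) i); lia.
Qed.

Lemma refined_special_mid N : lab1 (qo N) = i -> refined_special N = (i + lab2 (ro N))%nat.
Proof. intros E. unfold refined_special. rewrite E, Nat.ltb_irrefl, Nat.eqb_refl. auto. Qed.

Lemma refined_special_outer N : lab1 (qo N) <> i ->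
  refined_special N = (if Nat.ltb (lab1 (qo N)) i then lab1 (qo N) else (lab1 (qo N) + l - 1)%nat).
Proof.
  intros. unfold refined_special. destruct (Nat.ltb (lab1 (qo N)) i); auto.
  destruct (Nat.eqb_spec (lab1 (qo N)) i); auto; lia.
Qed.

Lemma H_flat q j u : (q < m1)%nat -> (j < k)%nat -> j <> lab1 q ->
  s1 q <= u <= s1 (S q) -> H u j = H (s1 q) j.
Proof. intros. apply HT1; auto. Qed.

(* Inside an interval of f where coordinate i moves, on the refined interval
   N the i-th lift of f stays in [s2 r, s2 (r+1)], so the coordinates of g
   other than lab2 r stay constant. *)
Lemma inner_flat N j u : (N < m1 * m2)%nat -> lab1 (qo N) = i -> (j < l)%nat -> j <> lab2 (ro N) ->
  refined_node N <= u <= refined_node (S N) -> K (H u i) j = K (H (refined_node N) i) j.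
Proof.
  intros HN Ei Hj Hne Hu.
  destruct (refined_interval N HN) as [Hq [Hr _]].
  destruct (refined_interval_spec N HN) as [B1 [B12 [B2 [C1 C2]]]].
  set (q := qo N) in *. set (r := ro N) in *.
  pose proof (s1_I q ltac:(lia)). pose proof (s1_I (S q) ltac:(lia)).
  assert (HuI : inI u) by (unfold inI in *; lra).
  assert (HsI : inI (refined_node N)) by (unfold inI in *; lra).
  assert (HsI2 : inI (refined_node (S N))) by (unfold inI in *; lra).
  pose proof (H_i_mono _ _ HsI HuI ltac:(lra)). pose proof (H_i_mono _ _ HuI HsI2 ltac:(lra)).
  destruct (Req_dec (level q r) (level q (S r))) as [Eq|Nq].
  { replace (H u i) with (H (refined_node N) i) by lra. reflexivity. }
  pose proof (lo_hi q Hq).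
  destruct (clamp_between (lo q) (hi q) (s2 r) (s2 (S r))) as [D1 D2];
    [lra | apply (wsub_mono m2 s2 HS2); lia | fold (level q r) (level q (S r)); lra |].
  fold (level q r) in D1. fold (level q (S r)) in D2.
  destruct HT2 as [_ HK]. rewrite C1.
  rewrite (HK r j Hr Hj Hne (H u i)), (HK r j Hr Hj Hne (level q r)) by lra. reflexivity.
Qed.

Lemma refined_special_structure :
  special_structure (k + l - 1) (comp_lift l i H K) (m1 * m2) refined_node refined_special.
Proof.
  split; [apply refined_special_lt|]. intros N p HN Hp Hne u Hu.
  destruct (refined_interval N HN) as [Hq [Hr _]].
  destruct (refined_interval_spec N HN) as [B1 [_ [B2 _]]].
  assert (Hu1 : s1 (qo N) <= u <= s1 (S (qo N))) by lra.
  assert (Hs1 : s1 (qo N) <= refined_node N <= s1 (S (qo N))) by lra.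
  unfold refined_special in Hne.
  destruct (lt_dec p i); [|destruct (lt_dec p (i + l))].
  - rewrite !comp_lift_lo by auto. assert (p <> lab1 (qo N)).
    { intro E. apply Hne. rewrite <- E. destruct (Nat.ltb_spec p i); lia. }
    rewrite (H_flat (qo N) p u), (H_flat (qo N) p (refined_node N)); auto; lia.
  - rewrite !comp_lift_mid by lia. destruct (Nat.eq_dec (lab1 (qo N)) i) as [Ei|Ni].
    + apply inner_flat; auto; try lia. intro E. apply Hne.
      rewrite Ei, Nat.ltb_irrefl, Nat.eqb_refl. lia.
    + rewrite (H_flat (qo N) i u), (H_flat (qo N) i (refined_node N)); auto; lia.
  - rewrite !comp_lift_hi by lia. assert ((p - l + 1)%nat <> lab1 (qo N)).
    { intro E. apply Hne. rewrite <- E. destruct (Nat.ltb_spec (p - l + 1) i); try lia.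
      destruct (Nat.eqb_spec (p - l + 1) i); lia. }
    rewrite (H_flat (qo N) (p - l + 1) u), (H_flat (qo N) (p - l + 1) (refined_node N)); auto; lia.
Qed.

Definition outer_index (p : nat) : nat :=
  if Nat.ltb p i then p else if Nat.ltb p (i + l) then i else (p - l + 1)%nat.

Lemma outer_index_special N : (N < m1 * m2)%nat -> outer_index (refined_special N) = lab1 (qo N).
Proof.
  intros HN. destruct (refined_interval N HN) as [Hq [Hr _]].
  pose proof (proj1 HT2 _ Hr). pose proof (proj1 HT1 _ Hq).
  unfold outer_index, refined_special.
  destruct (Nat.ltb_spec (lab1 (qo N)) i); [destruct (Nat.ltb_spec (lab1 (qo N)) i); lia|].
  destruct (Nat.eqb_spec (lab1 (qo N)) i).
  - destruct (Nat.ltb_spec (i + lab2 (ro N)) i); [lia|].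
    destruct (Nat.ltb_spec (i + lab2 (ro N)) (i + l)); lia.
  - destruct (Nat.ltb_spec (lab1 (qo N) + l - 1) i); [lia|].
    destruct (Nat.ltb_spec (lab1 (qo N) + l - 1) (i + l)); lia.
Qed.

Lemma inner_active N : (N < m1 * m2)%nat -> lab1 (qo N) = i ->
  comp_lift l i H K (refined_node N) (refined_special N) <
    comp_lift l i H K (refined_node (S N)) (refined_special N) ->
  s2 (ro N) <= level (qo N) (ro N) /\ level (qo N) (ro N) < level (qo N) (S (ro N)) /\
  level (qo N) (S (ro N)) <= s2 (S (ro N)).
Proof.
  intros HN Ei Ha. destruct (refined_interval N HN) as [Hq [Hr _]].
  destruct (refined_interval_spec N HN) as [_ [Hstep [_ [C1 C2]]]].
  pose proof (proj1 HT2 _ Hr).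
  rewrite refined_special_mid, !comp_lift_mid in Ha by (auto; lia).
  replace (i + lab2 (ro N) - i)%nat with (lab2 (ro N)) in Ha by lia. rewrite C1, C2 in Ha.
  assert (Hlt : level (qo N) (ro N) < level (qo N) (S (ro N))).
  { destruct (Rlt_le_dec (level (qo N) (ro N)) (level (qo N) (S (ro N)))) as [|Hle]; auto.
    destruct (HL2 (lab2 (ro N)) ltac:(auto)) as [_ [Hm _]].
    pose proof (level_range (qo N) (ro N) Hq). pose proof (level_range (qo N) (S (ro N)) Hq).
    pose proof (lo_hi (qo N) Hq).
    pose proof (Hm (level (qo N) (S (ro N))) (level (qo N) (ro N))
                  ltac:(unfold inI; lra) ltac:(unfold inI; lra) Hle). simpl in *. lra. }
  pose proof (lo_hi _ Hq).
  destruct (clamp_between (lo (qo N)) (hi (qo N)) (s2 (ro N)) (s2 (S (ro N)))) as [D1 D2];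
    [lra | apply (wsub_mono m2 s2 HS2); lia | exact Hlt |].
  split; [exact D1|]. split; [exact Hlt | exact D2].
Qed.

Lemma inner_active_order N N' : (N < N')%nat -> (N' < m1 * m2)%nat ->
  lab1 (qo N) = i -> lab1 (qo N') = i ->
  comp_lift l i H K (refined_node N) (refined_special N) <
    comp_lift l i H K (refined_node (S N)) (refined_special N) ->
  comp_lift l i H K (refined_node N') (refined_special N') <
    comp_lift l i H K (refined_node (S N')) (refined_special N') ->
  lab2 (ro N) <> lab2 (ro N') -> (ro N < ro N')%nat.
Proof.
  intros HNN HN' E E' A A' Hne.
  destruct (inner_active N ltac:(lia) E A) as [D1 [D2 D3]].
  destruct (inner_active N' HN' E' A') as [D1' [D2' D3']].
  destruct (refined_interval N ltac:(lia)) as [Hq [Hr _]].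
  destruct (refined_interval N' HN') as [Hq' [Hr' _]].
  pose proof m2_pos. unfold qo, ro in *.
  pose proof (Nat.div_mod N m2 ltac:(lia)). pose proof (Nat.div_mod N' m2 ltac:(lia)).
  pose proof (Nat.Div0.div_le_mono N N' m2 ltac:(lia)).
  destruct (Nat.eq_dec (N / m2) (N' / m2)) as [Eq|Nq]; [lia|].
  assert (Hlt : s2 (N mod m2) < s2 (S (N' mod m2))).
  { pose proof (level_range (N / m2) (S (N mod m2)) Hq).
    pose proof (level_range (N' / m2) (N' mod m2) Hq').
    pose proof (level_range (N / m2) (N mod m2) Hq).
    assert (hi (N / m2) <= lo (N' / m2)).
    { unfold lo, hi. apply H_i_mono; try apply s1_I; try lia.
      apply (wsub_mono m1 s1 HS1); lia. }
    lra. }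
  pose proof (wsub_idx m2 s2 HS2 (N mod m2) (S (N' mod m2)) ltac:(lia) ltac:(lia) Hlt).
  destruct (Nat.eq_dec (N mod m2) (N' mod m2)) as [Er|]; [congruence|lia].
Qed.

(* A crossing of active refined intervals lies either in one interval of f
   where coordinate i moves (a crossing for g) or projects to a crossing of
   the labels of f. *)
Lemma refined_active_noncrossing :
  active_noncrossing (comp_lift l i H K) (m1 * m2) refined_node refined_special.
Proof.
  intros a b c d Hab Hbc Hcd Hd Aa Ab Ac Ad [E1 [E2 E3]].
  pose proof (outer_index_special a ltac:(lia)) as Ba.
  pose proof (outer_index_special b ltac:(lia)) as Bb.
  pose proof (outer_index_special c ltac:(lia)) as Bc.
  pose proof (outer_index_special d ltac:(lia)) as Bd.
  assert (Pac : lab1 (qo a) = lab1 (qo c)) by congruence.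
  assert (Pbd : lab1 (qo b) = lab1 (qo d)) by congruence.
  destruct (Nat.eq_dec (lab1 (qo a)) (lab1 (qo b))) as [Eab|Nab].
  - destruct (Nat.eq_dec (lab1 (qo a)) i) as [Ei|Ni].
    + assert (Eb : lab1 (qo b) = i) by congruence. assert (Ec : lab1 (qo c) = i) by congruence.
      assert (Ed : lab1 (qo d) = i) by congruence.
      rewrite !refined_special_mid in E1, E2, E3 by auto.
      pose proof (inner_active_order a b Hab ltac:(lia) Ei Eb Aa Ab ltac:(lia)).
      pose proof (inner_active_order b c Hbc ltac:(lia) Eb Ec Ab Ac ltac:(lia)).
      pose proof (inner_active_order c d Hcd ltac:(lia) Ec Ed Ac Ad ltac:(lia)).
      destruct (refined_interval d ltac:(lia)) as [_ [Hr _]].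
      apply (HN2 (ro a) (ro b) (ro c) (ro d)); auto; lia.
    + apply E3. rewrite !refined_special_outer by congruence. rewrite Eab. auto.
  - unfold qo in *.
    pose proof (Nat.Div0.div_le_mono a b m2 ltac:(lia)).
    pose proof (Nat.Div0.div_le_mono b c m2 ltac:(lia)).
    pose proof (Nat.Div0.div_le_mono c d m2 ltac:(lia)).
    assert (a / m2 <> b / m2)%nat by (intro X; apply Nab; rewrite X; auto).
    assert (b / m2 <> c / m2)%nat by (intro X; apply Nab; rewrite Pac, <- X; auto).
    assert (c / m2 <> d / m2)%nat by (intro X; apply Nab; rewrite Pac, Pbd, X; auto).
    destruct (refined_interval d ltac:(lia)) as [Hq _]. unfold qo in Hq.
    apply (HN1 (a / m2)%nat (b / m2)%nat (c / m2)%nat (d / m2)%nat); lia.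
Qed.

End Composition.

(* The only subtle point is where
   the i-th lift of f equals 1: comp_op reads that coordinate through
   frac_part as 0, and the lifts of g take the values 0 and 1 there, which
   agree on the circle. *)
Lemma comp_represents k l i f g H K : (i < k)%nat -> (0 < l)%nat ->
  monotone_lifts k H -> represents k f H -> monotone_lifts l K -> represents l g K ->
  represents (k + l - 1) (comp_op k l i f g) (comp_lift l i H K).
Proof.
  intros Hik Hl HL1 Hf HL2 Hg t Ht p Hp. unfold comp_op.
  destruct (Nat.ltb_spec p i); [rewrite comp_lift_lo by auto; apply Hf; auto; lia|].
  destruct (Nat.ltb_spec p (i + l)); [|rewrite comp_lift_hi by lia; apply Hf; auto; lia].
  rewrite comp_lift_mid by lia.
  rewrite (frac_ceq _ _ (Hf t Ht i Hik)).
  pose proof (monotone_lifts_I k H i t HL1 Hik Ht) as HI.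
  destruct (HL2 (p - i)%nat ltac:(lia)) as [_ [_ [E0 E1]]].
  destruct (Req_dec (H t i) 1) as [E|NE].
  - rewrite E, (frac_ceq _ _ ceq_10), fp_R0, E1.
    eapply ceq_trans; [apply Hg; [unfold inI; lra | lia]|]. rewrite E0. apply ceq_sym, ceq_10.
  - rewrite frac_id by (unfold inI in HI; lra). apply Hg; auto; lia.
Qed.

Lemma comp_image k l i f g : (i < k)%nat -> in_image k f -> in_image l g ->
  in_image (k + l - 1) (comp_op k l i f g).
Proof.
  intros Hik Hf Hg. destruct (Nat.eq_dec l 0) as [->|Hl0]; [apply comp0_image; auto|].
  destruct (image_lift_data k f ltac:(lia) Hf) as [H [m1 [s1 [lab1 [HL1 [HS1 [HT1 [HN1 Hr1]]]]]]]].
  destruct (image_lift_data l g ltac:(lia) Hg) as [K [m2 [s2 [lab2 [HL2 [HS2 [HT2 [HN2 Hr2]]]]]]]].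
  apply subdivision_weak in HS1. apply subdivision_weak in HS2.
  assert (Hl : (0 < l)%nat) by lia.
  apply (image_of_lift_data _ _ (comp_lift l i H K) (m1 * m2)
           (refined_node i H s1 m2 s2) (refined_special l i lab1 m2 lab2)); [lia| | | | |].
  - eapply (comp_lift_monotone k l i); eauto.
  - eapply (refined_wsubdivision k l i); eauto.
  - eapply (refined_special_structure k l i); eauto.
  - eapply (refined_active_noncrossing k l i); eauto.
  - apply comp_represents; auto.
Qed.

Theorem proposition4p5 :
  (forall (n : nat) (g : cmap), (0 < n)%nat ->
     (in_image n g <-> is_based_map n g /\ cond1 n g /\ cond23 n g)) /\
  (in_image 1 id_op /\
   (forall (k l i : nat) (f g : cmap), (i < k)%nat ->
      in_image k f -> in_image l g -> in_image (k + l - 1) (comp_op k l i f g)) /\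
   (forall (n : nat) (sigma : nat -> nat) (g : cmap),
      is_perm n sigma -> in_image n g -> in_image n (perm_act g sigma))).
Proof.
  split; [exact image_characterisation|].
  split; [exact id_image|].
  split; [exact comp_image | exact perm_image].
Qed.
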